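(* Tile $\mathbb{R}^2$ by the closed unit squares $\{S_k\}_{k\ge 0}$ of the integer-translated grid whose centres are the points of $\mathbb{Z}^2$, with $S_0$ the square centred at the origin. Each square is either occupied or vacant. Let $C(0)$ be the occupied star-connected component containing $S_0$, and suppose $C(0)$ is finite. Let $G_C$ be the graph whose vertices are the corners of the squares of $C(0)$ and whose edges are the sides of the squares of $C(0)$, and let $\partial_0$ be the outermost boundary of $C(0)$, i.e. the set of edges $e$ of $G_C$ such that for every cycle $C$ in $G_C$, either $e$ is an edge of $C$ or $e$ lies in the exterior of $C$. Then $\partial_0$ is (the edge set of) a unique set of cycles $C_1,\dots,C_n$ in $G_C$ with the following properties: (i) the graph $\bigcup_{1\le i\le n} C_i$ is a connected subgraph of $G_C$; (ii) if $i\neq j$, the cycles $C_i$ and $C_j$ have disjoint interiors and share at most one vertex; (iii) every square $S_k\in C(0)$ is contained in the interior of some cycle $C_j$; (iv) if $e\in C_j$ for some $j$, then $e$ is a boundary edge of $C(0)$, adjacent to an occupied square of $C(0)$ lying in the interior of $C_j$ and adjacent to a vacant square lying in the exterior of $C_j$. Moreover, there exists a circuit $C_{out}$ containing every edge of $\bigcup_{1\le i\le n} C_i$.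
   Context: Two squares are star-adjacent (adjacent) if they share a corner, and plus-adjacent if they share an edge. $C(0)$ is empty if $S_0$ is vacant; otherwise it is the set of occupied squares $S$ such that there is a sequence of distinct occupied squares $S_0=Y_1,\dots,Y_t=S$ with $Y_i$ star-adjacent to $Y_{i+1}$ for all $i$. An edge $e$ is adjacent to a square if it is one of the sides of that square; $e$ is a boundary edge if it is adjacent to one vacant and one occupied square. A path is a sequence of distinct vertices with consecutive ones joined by an edge; a cycle is a sequence of distinct vertices $(v_0,\dots,v_m,v_0)$ with consecutive vertices (including $v_m,v_0$) joined by edges; a circuit is a closed sequence of vertices $(w_0,\dots,w_r,w_0)$ with consecutive vertices joined by edges and no edge repeated (vertices may repeat). A cycle divides the plane into two connected regions: the bounded one is its interior, the unbounded one its exterior. *)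

From Stdlib Require Import ZArith List Relations Arith.
Import ListNotations.
Open Scope Z_scope.

(* Square [c] is the closed unit square centred at [c];
   its corners are the points c + (+-1/2, +-1/2).  We label the corner
   c - (1/2,1/2) by the integer vertex [c], so the corners of square [c]
   are the vertices c, c+(1,0), c+(0,1), c+(1,1). *)
Definition pt := (Z * Z)%type.
Definition origin : pt := (0, 0).

(* An edge (unit side) of the grid: (p, true) joins p and p+(1,0),
   (p, false) joins p and p+(0,1).  Each grid edge has exactly one name. *)
Definition edge := (pt * bool)%type.

Definition ends (e : edge) : pt * pt :=
  match e with
  | (p, true) => (p, (fst p + 1, snd p))
  | (p, false) => (p, (fst p, snd p + 1))
  end.

Definition joins (e : edge) (u v : pt) : Prop :=
  (u = fst (ends e) /\ v = snd (ends e)) \/ (u = snd (ends e) /\ v = fst (ends e)).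

Definition side_of (e : edge) (c : pt) : Prop :=
  match e with
  | (p, true) => p = c \/ p = (fst c, snd c + 1)
  | (p, false) => p = c \/ p = (fst c + 1, snd c)
  end.

Definition corner (v c : pt) : Prop :=
  v = c \/ v = (fst c + 1, snd c) \/ v = (fst c, snd c + 1)
  \/ v = (fst c + 1, snd c + 1).

Definition star_adj (a b : pt) : Prop :=
  a <> b /\ Z.abs (fst a - fst b) <= 1 /\ Z.abs (snd a - snd b) <= 1.

Fixpoint chain {A : Type} (R : A -> A -> Prop) (l : list A) : Prop :=
  match l with
  | x :: ((y :: _) as t) => R x y /\ chain R t
  | _ => True
  end.

(* C(0): squares S reachable from S_0 by a sequence of distinct occupied,
   consecutively star-adjacent squares (empty if S_0 is vacant). *)
Definition C0 (occ : pt -> Prop) (s : pt) : Prop :=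
  exists Y : list pt,
    NoDup (origin :: Y) /\ Forall occ (origin :: Y) /\
    chain star_adj (origin :: Y) /\ last (origin :: Y) origin = s.

Definition finite_set {A : Type} (P : A -> Prop) : Prop :=
  exists l : list A, forall x, P x -> In x l.

Definition GC_vertex (occ : pt -> Prop) (v : pt) : Prop :=
  exists c, C0 occ c /\ corner v c.
Definition GC_edge (occ : pt -> Prop) (e : edge) : Prop :=
  exists c, C0 occ c /\ side_of e c.

Definition boundary_edge (occ : pt -> Prop) (e : edge) : Prop :=
  exists c1 c2, side_of e c1 /\ side_of e c2 /\ occ c1 /\ ~ occ c2.

Definition nxt (n i : nat) : nat := Nat.modulo (S i) n.

(* A cycle (v_0,...,v_m,v_0) of G_C, given as the list [v_0;...;v_m] of
   distinct vertices, m >= 2, consecutive ones (cyclically) joined by an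
   edge of G_C. *)
Definition is_cycle (occ : pt -> Prop) (C : list pt) : Prop :=
  (3 <= length C)%nat /\ NoDup C /\
  forall i, (i < length C)%nat ->
    exists e, GC_edge occ e /\
      joins e (nth i C origin) (nth (nxt (length C) i) C origin).

Definition cycle_edge (C : list pt) (e : edge) : Prop :=
  exists i, (i < length C)%nat /\
    joins e (nth i C origin) (nth (nxt (length C) i) C origin).

(* ---- Interior / exterior of a cycle ----
   The plane is decomposed into the cells of the grid: open unit squares,
   open unit edges and vertices.  A cycle is a union of closed edges, so its
   complement is the union of the cells not lying on it, and two such cells
   lie in the same connected component of the complement iff they are
   joined by a chain of incident cells off the cycle.  The interior is the
   bounded component (made of finitely many cells), the exterior the
   unbounded one. *)
Inductive cell : Type :=
| Sq : pt -> cell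
| Ed : edge -> cell
| Vx : pt -> cell.

Definition incident (x y : cell) : Prop :=
  match x, y with
  | Sq c, Ed e => side_of e c
  | Ed e, Sq c => side_of e c
  | Ed e, Vx v => v = fst (ends e) \/ v = snd (ends e)
  | Vx v, Ed e => v = fst (ends e) \/ v = snd (ends e)
  | _, _ => False
  end.

Definition off_cycle (C : list pt) (x : cell) : Prop :=
  match x with
  | Sq _ => True
  | Ed e => ~ cycle_edge C e
  | Vx v => ~ In v C
  end.

Definition same_component (C : list pt) : cell -> cell -> Prop :=
  clos_refl_trans cell
    (fun x y => off_cycle C x /\ off_cycle C y /\ incident x y).

Definition in_interior (C : list pt) (x : cell) : Prop :=
  off_cycle C x /\ finite_set (same_component C x).

Definition in_exterior (C : list pt) (x : cell) : Prop :=
  off_cycle C x /\ ~ finite_set (same_component C x).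

Definition outer_boundary (occ : pt -> Prop) (e : edge) : Prop :=
  GC_edge occ e /\
  forall C, is_cycle occ C -> cycle_edge C e \/ in_exterior C (Ed e).

Definition union_edge (Cs : list (list pt)) (e : edge) : Prop :=
  exists C, In C Cs /\ cycle_edge C e.
Definition union_vertex (Cs : list (list pt)) (v : pt) : Prop :=
  exists C, In C Cs /\ In v C.

Definition union_connected (Cs : list (list pt)) : Prop :=
  forall u v, union_vertex Cs u -> union_vertex Cs v ->
    exists ws : list pt, NoDup (u :: ws) /\
      chain (fun a b => exists e, union_edge Cs e /\ joins e a b) (u :: ws) /\
      last (u :: ws) u = v.

Definition good_family (occ : pt -> Prop) (Cs : list (list pt)) : Prop :=
  (forall C, In C Cs -> is_cycle occ C) /\
  (forall e, union_edge Cs e <-> outer_boundary occ e) /\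
  union_connected Cs /\
  (forall i j, (i < length Cs)%nat -> (j < length Cs)%nat -> i <> j ->
     (forall x, ~ (in_interior (nth i Cs []) x /\ in_interior (nth j Cs []) x)) /\
     (forall u v, In u (nth i Cs []) -> In u (nth j Cs []) ->
                  In v (nth i Cs []) -> In v (nth j Cs []) -> u = v)) /\
  (forall k, C0 occ k -> exists C, In C Cs /\ in_interior C (Sq k)) /\
  (forall C e, In C Cs -> cycle_edge C e ->
     boundary_edge occ e /\
     (exists c, side_of e c /\ C0 occ c /\ in_interior C (Sq c)) /\
     (exists c, side_of e c /\ ~ occ c /\ in_exterior C (Sq c))).

(* two families determine the same set of cycles (cycles identified with
   their edge sets, i.e. as subgraphs) *)
Definition same_cycle (C C' : list pt) : Prop :=
  forall e, cycle_edge C e <-> cycle_edge C' e.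
Definition same_family (Cs Cs' : list (list pt)) : Prop :=
  (forall C, In C Cs -> exists C', In C' Cs' /\ same_cycle C C') /\
  (forall C', In C' Cs' -> exists C, In C Cs /\ same_cycle C C').

(* A circuit (w_0,...,w_r,w_0) in G_C: ws = [w_0;...;w_r], es the list of the
   traversed edges, es_i joining w_i and w_{i+1} (cyclically), no edge
   repeated. *)
Definition is_circuit (occ : pt -> Prop) (ws : list pt) (es : list edge) : Prop :=
  ws <> [] /\ length es = length ws /\ NoDup es /\
  forall i, (i < length ws)%nat ->
    GC_edge occ (nth i es (origin, true)) /\
    joins (nth i es (origin, true)) (nth i ws origin)
          (nth (nxt (length ws) i) ws origin).

(* Call a square outer vacant if it is joined to infinity by a chain of
   plus-adjacent squares outside C(0).  Orient every side separating a square
   of C(0) from an outer vacant square as a dart with C(0) on its left.  Tracing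
   the boundary keeping C(0) on the left (turn left if possible, else go
   straight, else turn right) gives an injective successor map on these
   finitely many darts; its orbits are the cycles C_i.  A cell is inside an
   orbit cycle exactly when an eastward ray from it crosses the cycle an odd
   number of times: this parity is constant off the cycle and vanishes on outer
   vacant squares, which reach infinity.  The decisive local facts (the
   successor is a boundary dart and is injective, no orbit passes twice through
   a vertex, a closed walk through boundary edges must turn as the successor
   does) only involve the statuses of the four squares at a vertex and the
   crossing parities there, and are checked on all configurations.  Orbit
   cycles enclosing star-adjacent squares touch, so their union is connected
   and splicing orbits at shared vertices yields the circuit.  Finally every
   cycle made of outer boundary edges is an orbit, which gives uniqueness. *)

From Pilot Require Import Defs.
From Stdlib Require Import ZArith List Relations Arith Lia Bool Permutation.
From Stdlib Require Import Classical ClassicalEpsilon.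
Import ListNotations.
Open Scope Z_scope.

Definition dec (P : Prop) : bool := if excluded_middle_informative P then true else false.

Lemma dec_true (P : Prop) : dec P = true <-> P.
Proof. unfold dec; destruct (excluded_middle_informative P); split; intuition congruence. Qed.

Lemma dec_false (P : Prop) : dec P = false <-> ~ P.
Proof. unfold dec; destruct (excluded_middle_informative P); split; intuition congruence. Qed.

Ltac zcase :=
  repeat (first [ match goal with |- context [Z.eqb ?a ?b] => destruct (Z.eqb_spec a b); simpl end
                | match goal with |- context [Z.ltb ?a ?b] => destruct (Z.ltb_spec a b); simpl end ]).

Ltac inj_pairs := repeat match goal with H : (_, _) = (_, _) |- _ => injection H; clear H; intros end.

Fixpoint sumN (f : nat -> Z) (n : nat) : Z := match n with O => 0 | S k => sumN f k + f k end.

Lemma sumN_ext f g n : (forall t, (t < n)%nat -> f t = g t) -> sumN f n = sumN g n.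
Proof. induction n; simpl; intros; auto. rewrite IHn, H; auto. Qed.

Lemma sumN_add f g n : sumN (fun t => f t + g t) n = sumN f n + sumN g n.
Proof. induction n; simpl; lia. Qed.

Lemma sumN_sub f g n : sumN (fun t => f t - g t) n = sumN f n - sumN g n.
Proof. induction n; simpl; lia. Qed.

Lemma sumN_even f n : (forall t, (t < n)%nat -> Z.even (f t) = true) -> Z.even (sumN f n) = true.
Proof. induction n; simpl; intros; auto. rewrite Z.even_add, IHn, H; auto. Qed.

Lemma sumN_shift f n : sumN (fun t => f (S t)) n = sumN f n + f n - f O.
Proof. induction n; simpl; lia. Qed.

Lemma sumN_zero f n : (forall t, (t < n)%nat -> f t = 0) -> sumN f n = 0.
Proof. induction n; simpl; intros; auto. rewrite IHn, H; auto. Qed.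

Lemma sumN_first f n : sumN f (S n) = f O + sumN (fun t => f (S t)) n.
Proof. induction n; simpl in *; lia. Qed.

Lemma sumN_two_ends f L : (2 <= L)%nat -> (forall t, (0 < t)%nat -> (t < L - 1)%nat -> f t = 0) ->
  sumN f L = f O + f (L-1)%nat.
Proof.
  intros H1 H2. destruct L as [|[|k]]; try lia. rewrite sumN_first. simpl.
  rewrite sumN_zero; [replace (k - 0)%nat with k by lia; lia|]. intros t Ht; apply H2; lia.
Qed.

Lemma sumN_single (f : nat -> Z) L t0 : (forall t, (t < L)%nat -> f t = 0 \/ f t = 1) ->
  (t0 < L)%nat -> f t0 = 1 -> (forall t, (t < L)%nat -> f t = 1 -> t = t0) -> sumN f L = 1.
Proof.
  induction L; intros H1 H2 H3 H4; [lia|]. simpl. destruct (Nat.eq_dec t0 L).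
  - subst. rewrite sumN_zero; [lia|]. intros t Ht. destruct (H1 t ltac:(lia)) as [Q|Q]; auto.
    apply H4 in Q; lia.
  - rewrite IHL; auto; try lia. destruct (H1 L ltac:(lia)) as [Q|Q]; [lia|]. apply H4 in Q; lia.
Qed.

Lemma sumN_periodic (F : nat -> Z) p n : (forall t, F (t + p)%nat = F t) ->
  sumN (fun t => F (n + t)%nat) p = sumN F p.
Proof.
  intro HF. induction n; [reflexivity|].
  rewrite <- IHn. transitivity (sumN (fun t => F (n + S t)%nat) p).
  { apply sumN_ext; intros; f_equal; lia. }
  rewrite (sumN_shift (fun t' => F (n + t')%nat)). rewrite HF, Nat.add_0_r. lia.
Qed.

Lemma chain_cons_inv {A} (R : A -> A -> Prop) x l : chain R (x :: l) -> chain R l.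
Proof. destruct l; simpl; tauto. Qed.

Lemma chain_app {A} (R : A -> A -> Prop) l1 y l2 :
  chain R (l1 ++ y :: l2) <-> chain R (l1 ++ [y]) /\ chain R (y :: l2).
Proof.
  induction l1 as [|x l1 IH]; simpl. { split; [intros H; split; auto | tauto]. }
  destruct l1 as [|z l1]; simpl in *. { tauto. }
  rewrite IH; tauto.
Qed.

Lemma last_default_irrel {A} (a : A) l x z : last (a :: l) x = last (a :: l) z.
Proof.
  revert a; induction l as [|b l IH]; intros a; [reflexivity|].
  change (last (b :: l) x = last (b :: l) z); apply IH.
Qed.

Lemma chain_snoc {A} (R : A -> A -> Prop) l x y :
  chain R (x :: l) -> R (last (x :: l) x) y -> chain R (x :: l ++ [y]).
Proof.
  revert x; induction l as [|z l IH]; intros x H1 H2. simpl in *; auto.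
  change (R x z /\ chain R (z :: l ++ [y])). destruct H1 as [H1 H3]. split; [exact H1|].
  apply IH; [exact H3|]. change (R (last (z :: l) x) y) in H2. rewrite (last_default_irrel z l z x); auto.
Qed.

Lemma chain_nth {A} (R : A -> A -> Prop) l d :
  chain R l -> forall i, (S i < length l)%nat -> R (nth i l d) (nth (S i) l d).
Proof.
  induction l as [|x l IH]; simpl; intros H i Hi; [lia|]. destruct l as [|y l]; simpl in *; [lia|].
  destruct i; [tauto|]. apply (IH (proj2 H) i); simpl; lia.
Qed.

Lemma last_app_single {A} (l : list A) x y : last (l ++ [y]) x = y.
Proof.
  induction l as [|a l IH]; [reflexivity|]. destruct l as [|b l]; [reflexivity|].
  change (last ((b :: l) ++ [y]) x = y); exact IH.
Qed.

Lemma last_app_cons {A} (l1 l2 : list A) u x : last (l1 ++ u :: l2) x = last (u :: l2) x.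
Proof. induction l1 as [|a l1 IH]; auto. rewrite <- IH. destruct l1; reflexivity. Qed.

Lemma last_in {A} (l : list A) x : In (last (x :: l) x) (x :: l).
Proof.
  revert x; induction l as [|a l IH]; intros x; [left; reflexivity|].
  change (In (last (a :: l) x) (x :: a :: l)). rewrite (last_default_irrel a l x a). right; apply IH.
Qed.

Lemma nth_map_seq {A} (f : nat -> A) n i x : (i < n)%nat -> nth i (map f (seq 0 n)) x = f i.
Proof.
  intro H. rewrite nth_indep with (d' := f O) by (rewrite length_map, length_seq; auto).
  rewrite map_nth, seq_nth; auto.
Qed.

Lemma NoDup_map_on {A B} (f : A -> B) l :
  (forall x y, In x l -> In y l -> f x = f y -> x = y) -> NoDup l -> NoDup (map f l).
Proof.
  induction l as [|a l IH]; simpl; intros H1 H2; constructor.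
  - intro Q. apply in_map_iff in Q. destruct Q as [y [E Hy]]. inversion H2 as [|a' l' H3 H4 H5]; subst.
    assert (y = a) by (apply H1; auto). subst; contradiction.
  - apply IH; auto. inversion H2; auto.
Qed.

Lemma filter_lt {A} (p q : A -> bool) (l : list A) a :
  (forall x, p x = true -> q x = true) -> In a l -> q a = true -> p a = false ->
  (length (filter p l) < length (filter q l))%nat.
Proof.
  intros Hpq. induction l as [|b l IH]; simpl; [tauto|]. intros [<-|Ha] Hq Hp.
  - rewrite Hq, Hp. simpl. assert (forall l', (length (filter p l') <= length (filter q l'))%nat).
    { induction l' as [|z l' IHl']; simpl; auto.
      destruct (p z) eqn:E; [rewrite (Hpq _ E); simpl; lia|]. destruct (q z); simpl; lia. }
    specialize (H l); lia.
  - specialize (IH Ha Hq Hp). destruct (p b) eqn:E; [rewrite (Hpq _ E); simpl; lia|].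
    destruct (q b); simpl; lia.
Qed.

Lemma crt_sym {A} (R : A -> A -> Prop) : (forall x y, R x y -> R y x) ->
  forall x y, clos_refl_trans _ R x y -> clos_refl_trans _ R y x.
Proof. intros HR x y H; induction H; [apply rt_step; auto | apply rt_refl | eapply rt_trans; eauto]. Qed.

Lemma crt_cross {A} (R : A -> A -> Prop) (P : A -> Prop) x y :
  clos_refl_trans _ R x y -> P x -> ~ P y -> exists a b, R a b /\ P a /\ ~ P b.
Proof.
  intro H. induction H; intros Hx Hy.
  - eauto.
  - contradiction.
  - destruct (classic (P y)); eauto.
Qed.

Lemma crt_path {A} (R : A -> A -> Prop) u v : clos_refl_trans _ R u v ->
  exists ws, NoDup (u :: ws) /\ chain R (u :: ws) /\ last (u :: ws) u = v.
Proof.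
  intro H. apply clos_rt_rt1n in H. induction H.
  - exists []; repeat split; simpl; auto. constructor; auto; constructor.
  - destruct IHclos_refl_trans_1n as [ws [H1 [H2 H3]]].
    destruct (classic (In x (y :: ws))) as [Hin|Hin].
    + apply in_split in Hin. destruct Hin as [l1 [l2 E]]. exists l2. rewrite E in H1, H2, H3.
      split; [|split].
      * apply NoDup_app_remove_l in H1; auto.
      * apply chain_app in H2; tauto.
      * rewrite last_app_cons in H3. rewrite (last_default_irrel x l2 x y). auto.
    + exists (y :: ws). split; [|split].
      * constructor; auto.
      * split; auto.
      * change (last (y :: ws) x = z). rewrite (last_default_irrel y ws x y); auto.
Qed.

Definition list_radius (l : list pt) : Z :=
  fold_right (fun p m => Z.max m (Z.max (Z.abs (fst p)) (Z.abs (snd p)))) 0 l.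

Lemma list_radius_bound l p : In p l -> Z.abs (fst p) <= list_radius l /\ Z.abs (snd p) <= list_radius l.
Proof. induction l; simpl; intros H; [contradiction|]. destruct H; subst; [lia|]. specialize (IHl H); lia. Qed.

Lemma list_radius_nonneg l : 0 <= list_radius l.
Proof. induction l; simpl; lia. Qed.

(** * Crossing parity of closed walks *)

Definition pt_eqb (a b : pt) : bool := Z.eqb (fst a) (fst b) && Z.eqb (snd a) (snd b).

Lemma pt_eqb_spec a b : reflect (a = b) (pt_eqb a b).
Proof.
  destruct a as [a1 a2], b as [b1 b2]; unfold pt_eqb; simpl.
  destruct (Z.eqb_spec a1 b1), (Z.eqb_spec a2 b2); simpl; constructor; try congruence; subst; auto.
Qed.

Definition joinsb (e : edge) (u v : pt) : bool :=
  (pt_eqb u (fst (ends e)) && pt_eqb v (snd (ends e))) ||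
  (pt_eqb u (snd (ends e)) && pt_eqb v (fst (ends e))).

Lemma joinsb_spec e u v : reflect (joins e u v) (joinsb e u v).
Proof.
  unfold joinsb, joins.
  destruct (pt_eqb_spec u (fst (ends e))), (pt_eqb_spec v (snd (ends e))),
           (pt_eqb_spec u (snd (ends e))), (pt_eqb_spec v (fst (ends e))); simpl; constructor; tauto.
Qed.

Lemma joins_uniq e e' u v : joins e u v -> joins e' u v -> e = e'.
Proof.
  destruct e as [[a b] o], e' as [[a' b'] o']; unfold joins; simpl;
  destruct o, o'; simpl; intros H1 H2; destruct H1 as [[? ?]|[? ?]], H2 as [[? ?]|[? ?]]; subst; inj_pairs;
  first [ f_equal; f_equal; lia | exfalso; lia ].
Qed.

Definition adj (u v : pt) : Prop := exists e, joins e u v.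

(* A walk of length [L] is a function [g] read on [0..L]. *)
Definition step_count (g : nat -> pt) (L : nat) (p : pt -> pt -> bool) : Z :=
  sumN (fun t => if p (g t) (g (S t)) then 1 else 0) L.
(* The eastward ray from the centre of square [s] meets exactly the vertical
   edges [((a, snd s), false)] with [fst s < a]. *)
Definition crosses_ray (s : pt) (u w : pt) : bool :=
  Z.eqb (fst u) (fst w) && Z.ltb (fst s) (fst u) &&
  ((Z.eqb (snd u) (snd s) && Z.eqb (snd w) (snd s + 1)) ||
   (Z.eqb (snd w) (snd s) && Z.eqb (snd u) (snd s + 1))).
Definition ray_parity (g : nat -> pt) (L : nat) (s : pt) : bool := Z.odd (step_count g L (crosses_ray s)).
Definition edge_count (g : nat -> pt) (L : nat) (e : edge) : Z := step_count g L (joinsb e).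
Definition is_walk (g : nat -> pt) (L : nat) : Prop := forall t, (t < L)%nat -> adj (g t) (g (S t)).
Definition closed_walk (g : nat -> pt) (L : nat) : Prop := g L = g O.

Lemma crosses_ray_shift_x x y u w :
  (if crosses_ray (x,y) u w then 1 else 0) =
  (if crosses_ray (x+1,y) u w then 1 else 0) + (if joinsb ((x+1,y),false) u w then 1 else 0).
Proof. destruct u as [a b], w as [c d]; unfold crosses_ray, joinsb, pt_eqb; simpl; zcase; lia. Qed.

Lemma ray_parity_step_x g L x y x' : x' = x + 1 ->
  ray_parity g L (x,y) = xorb (ray_parity g L (x',y)) (Z.odd (edge_count g L ((x',y),false))).
Proof.
  intros ->; unfold ray_parity, edge_count, step_count. rewrite <- Z.odd_add, <- sumN_add.
  f_equal. apply sumN_ext; intros; apply crosses_ray_shift_x.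
Qed.

Lemma crosses_ray_shift_y x y u w : adj u w ->
  Z.even ((if (Z.eqb (snd u) (y+1) && Z.ltb x (fst u)) then 1 else 0) +
          (if (Z.eqb (snd w) (y+1) && Z.ltb x (fst w)) then 1 else 0) -
          (if crosses_ray (x,y) u w then 1 else 0) - (if crosses_ray (x,y+1) u w then 1 else 0) -
          (if joinsb ((x,y+1),true) u w then 1 else 0)) = true.
Proof.
  intros [e He]. destruct e as [[a b] o]; destruct o; unfold joins in He; simpl in He;
  destruct He as [[-> ->]|[-> ->]]; unfold crosses_ray, joinsb, pt_eqb; simpl; zcase; try reflexivity; lia.
Qed.

(* With [h p] recording whether [p] lies on row [y+1] east of [x], both sides
   count mod 2 the changes of [h] along the walk, which cancel on a closed
   walk. *)
Lemma ray_parity_step_y g L x y y' : is_walk g L -> closed_walk g L -> y' = y + 1 ->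
  ray_parity g L (x,y) = xorb (ray_parity g L (x,y')) (Z.odd (edge_count g L ((x,y'),true))).
Proof.
  intros Hw Hc ->. unfold ray_parity, edge_count, step_count.
  set (h := fun p : pt => if (Z.eqb (snd p) (y+1) && Z.ltb x (fst p)) then 1 else 0).
  assert (E: Z.even (sumN (fun t => h (g t) + h (g (S t)) -
          (if crosses_ray (x,y) (g t) (g (S t)) then 1 else 0) -
          (if crosses_ray (x,y+1) (g t) (g (S t)) then 1 else 0) -
          (if joinsb ((x,y+1),true) (g t) (g (S t)) then 1 else 0)) L) = true).
  { apply sumN_even; intros; apply crosses_ray_shift_y; auto. }
  rewrite !sumN_sub, sumN_add in E.
  rewrite (sumN_shift (fun t => h (g t))) in E. unfold closed_walk in Hc; rewrite Hc in E.
  set (A := sumN (fun t => if crosses_ray (x, y) (g t) (g (S t)) then 1 else 0) L) in *.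
  set (B := sumN (fun t => if crosses_ray (x, y+1) (g t) (g (S t)) then 1 else 0) L) in *.
  set (C := sumN (fun t => if joinsb ((x, y+1),true) (g t) (g (S t)) then 1 else 0) L) in *.
  set (H := sumN (fun t => h (g t)) L) in *.
  replace (H + (H + h (g 0%nat) - h (g 0%nat)) - A - B - C) with (2*H - (A + B + C)) in E by lia.
  rewrite Z.even_sub, Z.even_mul in E. simpl in E.
  rewrite <- !Z.odd_add, <- Z.negb_even.
  destruct (Z.even (A+B+C)) eqn:Q; simpl in E; try discriminate.
  replace (A + B + C) with (A + (B + C)) in Q by lia.
  rewrite Z.even_add, <- !Z.negb_odd in Q. rewrite Z.odd_add.
  rewrite <- Z.negb_odd, Z.odd_add in *.
  destruct (Z.odd A), (Z.odd B), (Z.odd C); simpl in *; auto; discriminate.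
Qed.

Inductive dir := DE | DN | DW | DS.
Definition dir_eqb (a b : dir) : bool :=
  match a, b with DE, DE | DN, DN | DW, DW | DS, DS => true | _, _ => false end.
Lemma dir_eqb_spec a b : reflect (a = b) (dir_eqb a b).
Proof. destruct a, b; simpl; constructor; congruence. Qed.

Definition dir_eq_dec (a b : dir) : {a = b} + {a <> b}.
Proof. decide equality. Defined.

Definition dx (d : dir) : Z := match d with DE => 1 | DW => -1 | _ => 0 end.
Definition dy (d : dir) : Z := match d with DN => 1 | DS => -1 | _ => 0 end.
Definition opp (d : dir) : dir := match d with DE => DW | DW => DE | DN => DS | DS => DN end.
Definition rotL (d : dir) : dir := match d with DE => DN | DN => DW | DW => DS | DS => DE end.
Definition rotR (d : dir) : dir := match d with DE => DS | DS => DW | DW => DN | DN => DE end.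
Lemma opp_opp o : opp (opp o) = o. Proof. destruct o; auto. Qed.

Definition dart := (pt * dir)%type.
Definition dart_eq_dec (a b : dart) : {a = b} + {a <> b}.
Proof. decide equality; [apply dir_eq_dec | decide equality; apply Z.eq_dec]. Defined.

Definition src (d : dart) : pt := fst d.
Definition tgt (d : dart) : pt := (fst (fst d) + dx (snd d), snd (fst d) + dy (snd d)).
Definition left_sq (d : dart) : pt :=
  match snd d with
  | DE => fst d | DN => (fst (fst d) - 1, snd (fst d))
  | DW => (fst (fst d) - 1, snd (fst d) - 1) | DS => (fst (fst d), snd (fst d) - 1)
  end.
Definition right_sq (d : dart) : pt :=
  match snd d with
  | DE => (fst (fst d), snd (fst d) - 1) | DN => fst d
  | DW => (fst (fst d) - 1, snd (fst d)) | DS => (fst (fst d) - 1, snd (fst d) - 1)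
  end.
Definition dart_edge (d : dart) : edge :=
  match snd d with
  | DE => (fst d, true) | DN => (fst d, false)
  | DW => ((fst (fst d) - 1, snd (fst d)), true) | DS => ((fst (fst d), snd (fst d) - 1), false)
  end.
Definition dart_rev (d : dart) : dart := (tgt d, opp (snd d)).

Ltac dcase d := let x := fresh "x" in let y := fresh "y" in let o := fresh "o" in
  destruct d as [[x y] o]; destruct o; unfold dart_rev, src, tgt, left_sq, right_sq, dart_edge in *;
  simpl in *.

Lemma dart_edge_joins d : joins (dart_edge d) (src d) (tgt d).
Proof. dcase d; unfold joins; simpl; first [left; split; f_equal; lia | right; split; f_equal; lia]. Qed.

Lemma side_left_sq d : side_of (dart_edge d) (left_sq d).
Proof. dcase d; simpl; first [left; f_equal; lia | right; f_equal; lia]. Qed.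

Lemma side_right_sq d : side_of (dart_edge d) (right_sq d).
Proof. dcase d; simpl; first [left; f_equal; lia | right; f_equal; lia]. Qed.

Lemma left_sq_rev d : left_sq (dart_rev d) = right_sq d.
Proof. dcase d; f_equal; lia. Qed.

Lemma right_sq_rev d : right_sq (dart_rev d) = left_sq d.
Proof. dcase d; f_equal; lia. Qed.

Lemma dart_edge_rev d : dart_edge (dart_rev d) = dart_edge d.
Proof. dcase d; repeat f_equal; lia. Qed.

Lemma dart_rev_involutive d : dart_rev (dart_rev d) = d.
Proof. dcase d; repeat f_equal; lia. Qed.

Lemma src_rev d : src (dart_rev d) = tgt d.
Proof. reflexivity. Qed.

Lemma tgt_rev d : tgt (dart_rev d) = src d.
Proof. dcase d; f_equal; lia. Qed.

Lemma src_tgt_neq d : src d <> tgt d.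
Proof. dcase d; intro H; inj_pairs; lia. Qed.

Lemma dart_eq_ends d d' : src d = src d' -> tgt d = tgt d' -> d = d'.
Proof. destruct d as [[x y] o], d' as [[x' y'] o']; unfold src, tgt; simpl; intros H1 H2; inj_pairs; subst.
  destruct o, o'; simpl in *; try reflexivity; exfalso; lia. Qed.

Lemma dart_edge_eq d d' : dart_edge d = dart_edge d' -> d = d' \/ d = dart_rev d'.
Proof. destruct d as [[x y] o], d' as [[x' y'] o']; unfold dart_edge, dart_rev, tgt; simpl; intros H;
  inj_pairs.
  destruct o, o'; simpl in *; inj_pairs; intros; subst; try discriminate;
  first [left; repeat f_equal; lia | right; repeat f_equal; lia]. Qed.

Lemma joins_dart_edge e d : joins e (src d) (tgt d) -> e = dart_edge d.
Proof. intro H; apply (joins_uniq e (dart_edge d) (src d) (tgt d)); auto using dart_edge_joins. Qed.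

Lemma joinsb_dart_edge e d : joinsb e (src d) (tgt d) = true <-> e = dart_edge d.
Proof. split; intro H. apply joins_dart_edge; apply (reflect_iff _ _ (joinsb_spec _ _ _)); auto.
  subst; apply (reflect_iff _ _ (joinsb_spec _ _ _)); apply dart_edge_joins. Qed.

Lemma adj_dart u v : adj u v -> exists d, src d = u /\ tgt d = v.
Proof. intros [[[a b] o] H]. unfold joins in H; destruct o; simpl in H; destruct H as [[-> ->]|[-> ->]].
  - exists ((a,b),DE); unfold src, tgt; simpl; split; f_equal; lia.
  - exists ((a+1,b),DW); unfold src, tgt; simpl; split; f_equal; lia.
  - exists ((a,b),DN); unfold src, tgt; simpl; split; f_equal; lia.
  - exists ((a,b+1),DS); unfold src, tgt; simpl; split; f_equal; lia. Qed.

Lemma dart_rev_at_tgt d w : tgt d = w -> d = dart_rev (w, opp (snd d)).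
Proof. intro H; subst.
  destruct d as [[x y] o]; destruct o; unfold dart_rev, tgt; simpl; repeat f_equal; lia. Qed.

Lemma dart_src d w : src d = w -> d = (w, snd d).
Proof. destruct d; unfold src; simpl; intros ->; auto. Qed.

Lemma side_dart_edge d c : side_of (dart_edge d) c -> c = left_sq d \/ c = right_sq d.
Proof. destruct c as [a b]; dcase d; intros [H|H]; inj_pairs; intros;
  first [left; f_equal; lia | right; f_equal; lia]. Qed.

Lemma left_right_star_adj d : star_adj (left_sq d) (right_sq d).
Proof. dcase d; unfold star_adj; simpl; repeat split; try (intro H; inj_pairs; lia); lia. Qed.

Lemma dart_edge_surj e : exists d, dart_edge d = e.
Proof. destruct e as [p [|]]; [exists (p,DE) | exists (p,DN)]; reflexivity. Qed.

(* The status of a square: in C(0), outer vacant, or anything else (an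
   occupied square off C(0) or a vacant square enclosed by C(0)). *)
Inductive status := StComp | StOuter | StOther.
Definition status_eqb (a b : status) : bool :=
  match a, b with StComp, StComp | StOuter, StOuter | StOther, StOther => true | _, _ => false end.

(* The statuses of the four squares around a vertex, in the order NE, NW, SW, SE. *)
Definition config := (status * status * status * status)%type.

(* The statuses (left, right) of the two squares beside the dart leaving the
   vertex in direction [d]. *)
Definition sides_toward (l : config) (d : dir) : status * status :=
  match l with (ne, nw, sw, se) =>
    match d with DE => (ne, se) | DN => (nw, ne) | DW => (sw, nw) | DS => (se, sw) end
  end.
Definition is_boundary_pair (p : status * status) : bool :=
  match p with (StComp, StOuter) => true | _ => false end.
Definition leaves_boundary (l : config) (d : dir) : bool := is_boundary_pair (sides_toward l d).
(* A dart arriving in direction [d] is the reverse of the dart leaving toward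
   [opp d], so its left and right squares are swapped. *)
Definition enters_boundary (l : config) (d : dir) : bool :=
  is_boundary_pair (let (a, b) := sides_toward l (opp d) in (b, a)).
Definition on_boundary (l : config) (d : dir) : bool :=
  let (a, b) := sides_toward l d in is_boundary_pair (a, b) || is_boundary_pair (b, a).
Definition local_succ (l : config) (d : dir) : dir :=
  if leaves_boundary l (rotL d) then rotL d else if leaves_boundary l d then d else rotR d.

(* An outer vacant square is never plus-adjacent to a square of status [StOther]. *)
Definition compatible (a b : status) : bool :=
  negb ((status_eqb a StOther && status_eqb b StOuter) || (status_eqb a StOuter && status_eqb b StOther)).
Definition valid_config (l : config) : bool :=
  match l with (ne, nw, sw, se) =>
    compatible ne nw && compatible nw sw && compatible sw se && compatible se ne
  end.

(* Crossing parities of a closed walk at the four squares around a vertex, from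
   the parity [pNE] and the parities [fl o] of the traversals of the four
   incident edges. *)
Definition parities_around (pNE : bool) (fl : dir -> bool) : bool * bool * bool * bool :=
  let pNW := xorb pNE (fl DN) in let pSW := xorb pNW (fl DW) in let pSE := xorb pSW (fl DS) in
  (pNE, pNW, pSW, pSE).
Definition parities_consistent (pNE : bool) (fl : dir -> bool) : bool :=
  match parities_around pNE fl with (pNE, _, _, pSE) => Bool.eqb (xorb pSE pNE) (fl DE) end.
Definition outer_even (s : status) (p : bool) : bool := negb (status_eqb s StOuter && p).
Definition outer_even_around (l : config) (pNE : bool) (fl : dir -> bool) : bool :=
  match l, parities_around pNE fl with (ne, nw, sw, se), (a, b, c, d) =>
    outer_even ne a && outer_even nw b && outer_even sw c && outer_even se d
  end.

(* Edge traversal parities at a vertex visited once, entering in direction [a]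
   and leaving in direction [b]. *)
Definition flips_through (a b : dir) (o : dir) : bool := xorb (dir_eqb o (opp a)) (dir_eqb o b).

Lemma flips_through_rev a b o : flips_through a b o = flips_through (opp b) (opp a) o.
Proof. unfold flips_through; rewrite opp_opp; apply xorb_comm. Qed.

Lemma local_succ_leaves l d :
  valid_config l && enters_boundary l d = true -> leaves_boundary l (local_succ l d) = true.
Proof.
  destruct l as [[[a b] c] e]; destruct a, b, c, e, d; vm_compute; intro H;
    first [reflexivity | discriminate].
Qed.

Lemma local_succ_inj l d1 d2 :
  valid_config l && enters_boundary l d1 && enters_boundary l d2 = true ->
  local_succ l d1 = local_succ l d2 -> d1 = d2.
Proof.
  destruct l as [[[a b] c] e]; destruct a, b, c, e, d1, d2; vm_compute; intros H1 H2;
    first [reflexivity | discriminate].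
Qed.

(* A closed walk entering a vertex along a boundary dart in direction [a] and
   leaving it once along a boundary edge in direction [b] must follow
   [local_succ]: otherwise some outer vacant square would get odd parity. *)
Lemma local_succ_forced l a b p :
  valid_config l && enters_boundary l a && on_boundary l b && negb (dir_eqb b (opp a)) &&
  parities_consistent p (flips_through a b) && outer_even_around l p (flips_through a b) = true ->
  b = local_succ l a.
Proof.
  destruct l as [[[a1 b1] c1] e1]; destruct a1, b1, c1, e1, a, b, p; vm_compute; intro H;
    first [reflexivity | discriminate].
Qed.

Lemma local_no_pinch l d1 d2 p :
  valid_config l && enters_boundary l d1 && enters_boundary l d2 && negb (dir_eqb d1 d2) &&
  parities_consistent p (flips_through d2 (local_succ l d1)) &&
  outer_even_around l p (flips_through d2 (local_succ l d1)) = false.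
Proof. destruct l as [[[a1 b1] c1] e1]; destruct a1, b1, c1, e1, d1, d2, p; vm_compute; reflexivity. Qed.

Section Cluster.
Variable occ : pt -> Prop.
Hypothesis Horig : occ origin.
Hypothesis Hfin : finite_set (C0 occ).

Definition comp_list : list pt := proj1_sig (constructive_indefinite_description _ Hfin).
Lemma comp_list_spec s : C0 occ s -> In s comp_list.
Proof. unfold comp_list; destruct (constructive_indefinite_description _ Hfin); simpl; auto. Qed.

Definition radius : Z := list_radius comp_list.

Lemma radius_nonneg : 0 <= radius.
Proof. apply list_radius_nonneg. Qed.

Lemma C0_radius s : C0 occ s -> Z.abs (fst s) <= radius /\ Z.abs (snd s) <= radius.
Proof. intro H; apply list_radius_bound, comp_list_spec, H. Qed.

Lemma C0_origin : C0 occ origin.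
Proof. exists []; repeat split; simpl; auto. constructor; [simpl; tauto | constructor]. Qed.

Lemma C0_path_elem Y s : NoDup (origin :: Y) -> Forall occ (origin :: Y) -> chain star_adj (origin :: Y) ->
   In s (origin :: Y) -> C0 occ s.
Proof. intros H1 H2 H3 H4. apply in_split in H4. destruct H4 as [l1 [l2 E]].
  destruct l1 as [|a l1].
  - simpl in E; injection E; intros; subst. apply C0_origin.
  - simpl in E; injection E; intros E1 E2; subst a.
    exists (l1 ++ [s]). rewrite E1 in *. repeat split.
    + rewrite app_comm_cons in H1. rewrite app_comm_cons. apply NoDup_app_remove_r with (l' := l2).
      rewrite <- app_assoc; simpl; auto.
    + rewrite Forall_forall in *; intros x Hx; apply H2. rewrite app_comm_cons in Hx |- *.
      apply in_app_or in Hx; apply in_or_app; destruct Hx; auto.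
      simpl in H; destruct H; [|contradiction]; subst; right; left; auto.
    + rewrite app_comm_cons in H3 |- *. apply (chain_app _ _ s l2) in H3; tauto.
    + rewrite app_comm_cons; apply last_app_single.
Qed.

Lemma C0_occ s : C0 occ s -> occ s.
Proof. intros [Y [H1 [H2 [H3 H4]]]]. rewrite Forall_forall in H2; apply H2. subst s.
  apply last_in. Qed.

Lemma C0_star a b : C0 occ a -> occ b -> star_adj a b -> C0 occ b.
Proof. intros [Y [H1 [H2 [H3 H4]]]] Hb Hab.
  destruct (classic (In b (origin :: Y))) as [Hin|Hin]. { eapply C0_path_elem; eauto. }
  exists (Y ++ [b]). repeat split.
  - rewrite app_comm_cons. apply NoDup_app; auto. constructor; auto; constructor.
    intros x Hx Hx'. simpl in Hx'; destruct Hx'; [subst; contradiction|auto].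
  - rewrite app_comm_cons; apply Forall_app; split; auto.
  - rewrite app_comm_cons. destruct Y as [|y Y]; simpl in *; [split; auto; subst; auto|].
    apply (chain_snoc _ (y :: Y) origin b) in H3; [simpl; auto|]. subst a. auto.
  - rewrite app_comm_cons; apply last_app_single.
Qed.

Definition plus_adj (s t : pt) : Prop :=
  (fst t = fst s + 1 /\ snd t = snd s) \/ (fst t = fst s - 1 /\ snd t = snd s) \/
  (fst t = fst s /\ snd t = snd s + 1) \/ (fst t = fst s /\ snd t = snd s - 1).
Lemma plus_adj_sym s t : plus_adj s t -> plus_adj t s.
Proof. unfold plus_adj; lia. Qed.

(* Any square east of C(0) would do: all of them are outer vacant. *)
Definition far_sq : pt := (radius + 1, 0).
Inductive outer_vacant : pt -> Prop :=
| ov_far : outer_vacant far_sq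
| ov_step s t : ~ C0 occ s -> plus_adj s t -> outer_vacant t -> outer_vacant s.
Lemma far_sq_not_C0 : ~ C0 occ far_sq.
Proof. intro H; apply C0_radius in H; unfold far_sq in H; simpl in H; lia. Qed.

Lemma outer_vacant_not_C0 s : outer_vacant s -> ~ C0 occ s.
Proof. destruct 1; auto using far_sq_not_C0. Qed.

Lemma beyond_radius_not_C0 s : radius < fst s -> ~ C0 occ s.
Proof. intros H1 H2; apply C0_radius in H2; lia. Qed.

Lemma outer_vacant_beyond_radius s : radius < fst s -> outer_vacant s.
Proof. intro H. destruct s as [x y]; simpl in H.
  assert (A : forall n : nat, outer_vacant (radius + 1 + Z.of_nat n, 0)).
  { induction n. - replace (radius + 1 + Z.of_nat 0) with (radius+1) by lia; constructor.
    - apply (ov_step _ (radius + 1 + Z.of_nat n, 0)); auto. apply beyond_radius_not_C0; simpl; lia.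
      unfold plus_adj; simpl; lia. }
  assert (B : forall n : nat, forall y, Z.abs y = Z.of_nat n -> outer_vacant (x, y)).
  { induction n; intros y' Hy.
    - replace y' with 0 by lia.
      replace x with (radius + 1 + Z.of_nat (Z.to_nat (x - radius - 1))) by lia; apply A.
    - destruct (Z_lt_le_dec y' 0).
      + apply (ov_step _ (x, y' + 1)); [apply beyond_radius_not_C0; simpl; lia |
        unfold plus_adj; simpl; lia | apply IHn; lia].
      + apply (ov_step _ (x, y' - 1)); [apply beyond_radius_not_C0; simpl; lia |
        unfold plus_adj; simpl; lia | apply IHn; lia]. }
  apply (B (Z.to_nat (Z.abs y))); lia. Qed.

Definition status_of (s : pt) : status :=
  if dec (C0 occ s) then StComp else if dec (outer_vacant s) then StOuter else StOther.
Lemma status_comp s : status_of s = StComp <-> C0 occ s.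
Proof. unfold status_of. destruct (dec (C0 occ s)) eqn:E1; [rewrite dec_true in E1|rewrite dec_false in E1].
  - split; auto.
  - destruct (dec (outer_vacant s)); split; intros; try discriminate; contradiction. Qed.

Lemma status_outer s : status_of s = StOuter <-> outer_vacant s.
Proof. unfold status_of. destruct (dec (C0 occ s)) eqn:E1; [rewrite dec_true in E1|rewrite dec_false in E1].
  - split; intros H; try discriminate. apply outer_vacant_not_C0 in H; contradiction.
  - destruct (dec (outer_vacant s)) eqn:E2; [rewrite dec_true in E2|rewrite dec_false in E2]; split;
    intros; auto; try discriminate; contradiction. Qed.

Lemma compatible_status_of s t : plus_adj s t -> compatible (status_of s) (status_of t) = true.
Proof. intro H. unfold compatible.
  destruct (status_of s) eqn:E1, (status_of t) eqn:E2; simpl; auto; exfalso.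
  - apply status_outer in E1. assert (~ outer_vacant t) by (intro Q; apply status_outer in Q; congruence).
    assert (~ C0 occ t) by (intro Q; apply status_comp in Q; congruence).
    apply H0; apply (ov_step _ s); auto. apply plus_adj_sym; auto.
  - apply status_outer in E2. assert (~ outer_vacant s) by (intro Q; apply status_outer in Q; congruence).
    assert (~ C0 occ s) by (intro Q; apply status_comp in Q; congruence).
    apply H0; apply (ov_step _ t); auto.
Qed.

Definition sNE (w : pt) : pt := w.
Definition sNW (w : pt) : pt := (fst w - 1, snd w).
Definition sSW (w : pt) : pt := (fst w - 1, snd w - 1).
Definition sSE (w : pt) : pt := (fst w, snd w - 1).
Definition config_at (w : pt) : config :=
  (status_of (sNE w), status_of (sNW w), status_of (sSW w), status_of (sSE w)).
Lemma config_at_valid w : valid_config (config_at w) = true.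
Proof. unfold valid_config, config_at.
  rewrite !compatible_status_of; auto; unfold plus_adj, sNE, sNW, sSW, sSE; simpl; lia. Qed.

Definition bdart (d : dart) : Prop := C0 occ (left_sq d) /\ outer_vacant (right_sq d).
Lemma boundary_pair_status a b : is_boundary_pair (status_of a, status_of b) = true <->
  C0 occ a /\ outer_vacant b.
Proof. rewrite <- status_comp, <- status_outer.
  destruct (status_of a), (status_of b); simpl; intuition congruence. Qed.

Lemma sides_toward_config_at w o : sides_toward (config_at w) o = (status_of (left_sq (w,o)),
  status_of (right_sq (w,o))).
Proof. destruct o; reflexivity. Qed.

Lemma leaves_boundary_iff w o : leaves_boundary (config_at w) o = true <-> bdart (w,o).
Proof. unfold leaves_boundary. rewrite sides_toward_config_at, boundary_pair_status. reflexivity. Qed.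

Lemma enters_boundary_iff d : enters_boundary (config_at (tgt d)) (snd d) = true <-> bdart d.
Proof. unfold enters_boundary. rewrite sides_toward_config_at. rewrite boundary_pair_status.
  unfold bdart.
  change (C0 occ (right_sq (dart_rev d)) /\ outer_vacant (left_sq (dart_rev d)) <-> C0 occ (left_sq d)
  /\ outer_vacant (right_sq d)).
  rewrite left_sq_rev, right_sq_rev. tauto. Qed.

Lemma on_boundary_iff w o : on_boundary (config_at w) o = true <->
  (C0 occ (left_sq (w,o)) /\ outer_vacant (right_sq (w,o))) \/ (C0 occ (right_sq (w,o)) /\
  outer_vacant (left_sq (w,o))).
Proof. unfold on_boundary. rewrite sides_toward_config_at. rewrite orb_true_iff, !boundary_pair_status.
  reflexivity. Qed.

Definition next_dart (d : dart) : dart := (tgt d, local_succ (config_at (tgt d)) (snd d)).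
Lemma src_next_dart d : src (next_dart d) = tgt d.
Proof. reflexivity. Qed.

Lemma next_dart_bdart d : bdart d -> bdart (next_dart d).
Proof. intro H. apply leaves_boundary_iff. apply local_succ_leaves. rewrite config_at_valid; simpl.
  apply enters_boundary_iff; auto. Qed.

Lemma next_dart_inj d1 d2 : bdart d1 -> bdart d2 -> next_dart d1 = next_dart d2 -> d1 = d2.
Proof. intros H1 H2 E. unfold next_dart in E.
  assert (E1 : tgt d1 = tgt d2) by (apply (f_equal fst) in E; exact E).
  assert (E2 : local_succ (config_at (tgt d1)) (snd d1) = local_succ (config_at (tgt d2)) (snd d2)) by
  (apply (f_equal snd) in E; exact E).
  apply enters_boundary_iff in H1; apply enters_boundary_iff in H2. rewrite E1 in H1, E2.
  assert (snd d1 = snd d2). { apply (local_succ_inj (config_at (tgt d2))); auto.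
  rewrite config_at_valid, H1, H2; reflexivity. }
  rewrite (dart_rev_at_tgt d1 (tgt d1)), (dart_rev_at_tgt d2 (tgt d2)) by reflexivity.
  rewrite E1, H; reflexivity. Qed.

Lemma bdart_rev d : bdart d -> ~ bdart (dart_rev d).
Proof. intros [H1 H2] [H3 H4]. rewrite left_sq_rev in H3. apply outer_vacant_not_C0 in H2; contradiction. Qed.

Lemma bdart_edge_inj d d' : bdart d -> bdart d' -> dart_edge d = dart_edge d' -> d = d'.
Proof. intros H1 H2 E. destruct (dart_edge_eq _ _ E); auto. subst. exfalso; apply (bdart_rev d'); auto. Qed.

(** * The successor map and its orbits *)

Definition darts_around (c : pt) : list dart :=
  [(c,DE); ((fst c + 1, snd c),DN); ((fst c + 1, snd c + 1),DW); ((fst c, snd c + 1),DS)].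
Lemma in_darts_around d : In d (darts_around (left_sq d)).
Proof. destruct d as [[x y] o]; destruct o; unfold darts_around, left_sq; simpl;
  [left; reflexivity | right; left | right; right; left |
  right; right; right; left]; repeat f_equal; lia. Qed.

Definition bdarts : list dart :=
  filter (fun d => dec (bdart d)) (nodup dart_eq_dec (flat_map darts_around comp_list)).
Lemma in_bdarts d : In d bdarts <-> bdart d.
Proof. unfold bdarts. rewrite filter_In, nodup_In, in_flat_map, dec_true. split; [tauto|].
  intro H; split; auto. exists (left_sq d); split; [apply comp_list_spec, H | apply in_darts_around]. Qed.

Lemma NoDup_bdarts : NoDup bdarts.
Proof. apply NoDup_filter, NoDup_nodup. Qed.

Definition adv (n : nat) (d : dart) : dart := Nat.iter n next_dart d.
Lemma adv_S n d : adv (S n) d = next_dart (adv n d). Proof. reflexivity. Qed.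

Lemma adv_add m n d : adv (m + n) d = adv m (adv n d).
Proof. induction m; [reflexivity|]. change (next_dart (adv (m+n) d) = next_dart (adv m (adv n d))).
  rewrite IHm; reflexivity. Qed.

Lemma adv_bdart n d : bdart d -> bdart (adv n d).
Proof. intro H; induction n; auto. rewrite adv_S; apply next_dart_bdart; auto. Qed.

Lemma src_adv_S n d : src (adv (S n) d) = tgt (adv n d).
Proof. rewrite adv_S; apply src_next_dart. Qed.

Lemma adv_shift d i k : bdart d -> adv i d = adv (i + k) d -> d = adv k d.
Proof. intro HD; induction i; intros H; auto.
  apply IHi. apply next_dart_inj; try apply adv_bdart; auto. Qed.

Lemma return_ex d : bdart d -> exists p, (0 < p)%nat /\ adv p d = d.
Proof. intro HD. set (N := length bdarts). set (l := map (fun i => adv i d) (seq 0 (S N))).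
  assert (Hincl : incl l bdarts). { intros x Hx. unfold l in Hx; apply in_map_iff in Hx.
    destruct Hx as [i [<- _]]. apply in_bdarts, adv_bdart, HD. }
  destruct (classic (NoDup l)) as [Hn|Hn].
  - apply (NoDup_incl_length Hn) in Hincl. unfold l in Hincl; rewrite length_map, length_seq in Hincl. lia.
  - rewrite (NoDup_nth l d) in Hn. apply not_all_ex_not in Hn; destruct Hn as [i Hn].
    apply not_all_ex_not in Hn; destruct Hn as [j Hn].
    unfold l in Hn; rewrite length_map, length_seq in Hn.
    assert (Hij : (i < S N)%nat /\ (j < S N)%nat /\ adv i d = adv j d /\ i <> j).
    { destruct (classic (i < S N)%nat) as [Hi|Hi]; [|exfalso; apply Hn; intros; contradiction].
      destruct (classic (j < S N)%nat) as [Hj|Hj]; [|exfalso; apply Hn; intros; contradiction].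
      rewrite !nth_map_seq in Hn by auto.
      destruct (classic (adv i d = adv j d)) as [E|E]; [|exfalso; apply Hn; intros; contradiction].
      repeat split; auto. }
    clear Hn. destruct Hij as [Hi [Hj [E Hne]]].
    destruct (Nat.lt_ge_cases i j).
    + exists (j - i)%nat; split; [lia|]. symmetry; apply (adv_shift d i); auto.
      replace (i + (j - i))%nat with j by lia; auto.
    + exists (i - j)%nat; split; [lia|]. symmetry; apply (adv_shift d j); auto.
      replace (j + (i - j))%nat with i by lia; auto.
Qed.

Definition is_period (d : dart) (n : nat) : Prop := (0 < n)%nat /\ (bdart d -> adv n d = d).
Lemma least_period_ex d : exists n, is_period d n /\ forall m, is_period d m -> (n <= m)%nat.
Proof. assert (H : exists n, is_period d n).
  { destruct (classic (bdart d)) as [HD|HD].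
    - destruct (return_ex d HD) as [p [H1 H2]]; exists p; split; auto.
    - exists 1%nat; split; auto; intro; contradiction. }
  destruct (Wf_nat.dec_inh_nat_subset_has_unique_least_element (is_period d) (fun n => classic _) H)
    as [n [[H1 H2] _]].
  exists n; split; auto. Qed.

Definition period (d : dart) : nat := proj1_sig (constructive_indefinite_description _ (least_period_ex d)).
Lemma period_spec d : is_period d (period d) /\ forall m, is_period d m -> (period d <= m)%nat.
Proof. unfold period; destruct (constructive_indefinite_description _ _); simpl; auto. Qed.

Lemma period_pos d : (0 < period d)%nat.
Proof. apply (proj1 (period_spec d)). Qed.

Lemma adv_period d : bdart d -> adv (period d) d = d.
Proof. apply (proj1 (period_spec d)). Qed.

Lemma period_min d m : bdart d -> (0 < m)%nat -> adv m d = d -> (period d <= m)%nat.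
Proof. intros; apply (proj2 (period_spec d)); split; auto. Qed.

Lemma adv_period_mul d q : bdart d -> adv (q * period d) d = d.
Proof. intro HD; induction q; auto. change (adv (period d + q * period d) d = d).
  rewrite adv_add, IHq, adv_period; auto. Qed.

Lemma adv_mod d n : bdart d -> adv n d = adv (n mod period d) d.
Proof. intro HD. pose proof (period_pos d).
  rewrite (Nat.div_mod n (period d)) at 1 by lia.
  rewrite Nat.add_comm, adv_add, Nat.mul_comm, adv_period_mul; auto. Qed.

Lemma adv_inj d i j : bdart d -> (i < period d)%nat -> (j < period d)%nat -> adv i d = adv j d -> i = j.
Proof. intros HD Hi Hj E. destruct (Nat.lt_total i j) as [H|[H|H]]; auto; exfalso.
  - assert (E' : d = adv (j - i) d) by (apply (adv_shift d i); [auto|];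
    replace (i + (j - i))%nat with j by lia; auto).
    pose proof (period_min d (j - i) HD ltac:(lia) (eq_sym E')). lia.
  - assert (E' : d = adv (i - j) d) by (apply (adv_shift d j); [auto|];
    replace (j + (i - j))%nat with i by lia; auto).
    pose proof (period_min d (i - j) HD ltac:(lia) (eq_sym E')). lia. Qed.

Lemma adv_adv d m n : adv m (adv n d) = adv (m + n) d.
Proof. rewrite adv_add; auto. Qed.

Definition orbit_cycle (d : dart) : list pt := map (fun i => src (adv i d)) (seq 0 (period d)).
Lemma length_orbit_cycle d : length (orbit_cycle d) = period d.
Proof. unfold orbit_cycle; rewrite length_map, length_seq; auto. Qed.

(* The list [C] read cyclically: [cyc_at C] is a closed walk of length [length C]. *)
Definition cyc_at (C : list pt) (t : nat) : pt := nth (t mod length C) C origin.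
Lemma cyc_at_orbit d t : bdart d -> cyc_at (orbit_cycle d) t = src (adv t d).
Proof. intro HD. unfold cyc_at. rewrite length_orbit_cycle. unfold orbit_cycle. rewrite nth_map_seq.
  rewrite <- adv_mod; auto. apply Nat.mod_upper_bound; pose proof (period_pos d); lia. Qed.

Lemma cyc_at_lt C t : (t < length C)%nat -> cyc_at C t = nth t C origin.
Proof. intro H; unfold cyc_at; rewrite Nat.mod_small; auto. Qed.

Lemma cyc_at_nxt C t : nth (nxt (length C) t) C origin = cyc_at C (S t).
Proof. reflexivity. Qed.

Lemma cyc_at_period C t : (0 < length C)%nat -> cyc_at C (t + length C) = cyc_at C t.
Proof. intro H; unfold cyc_at. f_equal.
  rewrite <- Nat.Div0.add_mod_idemp_r, Nat.Div0.mod_same, Nat.add_0_r; auto. Qed.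

Lemma cyc_at_in C t : (0 < length C)%nat -> In (cyc_at C t) C.
Proof. intro H; unfold cyc_at; apply nth_In, Nat.mod_upper_bound; lia. Qed.

Lemma in_cyc_at C v : In v C -> exists t, (t < length C)%nat /\ cyc_at C t = v.
Proof. intro H. apply In_nth with (d := origin) in H. destruct H as [t [H1 H2]]. exists t; split; auto.
  rewrite cyc_at_lt; auto. Qed.

(** * Interior and exterior of a cycle *)

Definition in_box (v : pt) := -radius <= fst v <= radius + 1 /\ -radius <= snd v <= radius + 1.
(* The two squares having [e] as a side: [sqA e] north or east of it, [sqB e]
   south or west. *)
Definition sqA (e : edge) : pt := fst e.
Definition sqB (e : edge) : pt :=
  if snd e then (fst (fst e), snd (fst e) - 1) else (fst (fst e) - 1, snd (fst e)).
Lemma side_of_iff e c : side_of e c <-> c = sqA e \/ c = sqB e.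
Proof. destruct e as [[x y] [|]]; destruct c as [a b]; unfold sqA, sqB; simpl; split; intros [H|H];
  inj_pairs; intros;
  first [left; f_equal; lia | right; f_equal; lia]. Qed.

Lemma side_A e : side_of e (sqA e). Proof. apply side_of_iff; auto. Qed.

Lemma side_B e : side_of e (sqB e). Proof. apply side_of_iff; auto. Qed.

Lemma GC_edge_iff e : GC_edge occ e <-> C0 occ (sqA e) \/ C0 occ (sqB e).
Proof. unfold GC_edge; split.
  - intros [c [H1 H2]]; apply side_of_iff in H2; destruct H2; subst; auto.
  - intros [H|H]; eexists; split; eauto using side_A, side_B. Qed.

Lemma GC_edge_ends_in_box e : GC_edge occ e -> in_box (fst (ends e)) /\ in_box (snd (ends e)).
Proof. rewrite GC_edge_iff; intros H. destruct e as [[x y] [|]]; unfold sqA, sqB, in_box in *; simpl in *;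
  destruct H as [H|H]; apply C0_radius in H; simpl in H; lia. Qed.

Lemma joins_in_box e u v : GC_edge occ e -> joins e u v -> in_box u /\ in_box v.
Proof. intros H1 H2; apply GC_edge_ends_in_box in H1; destruct H2 as [[-> ->]|[-> ->]]; tauto. Qed.

Lemma plus_adj_edge s t : plus_adj s t -> exists e, (s = sqA e /\ t = sqB e) \/ (s = sqB e /\ t = sqA e).
Proof. destruct s as [a b], t as [c d]; unfold plus_adj; simpl; intros H.
  destruct H as [[H1 H2]|[[H1 H2]|[[H1 H2]|[H1 H2]]]]; subst.
  - exists ((a+1,b),false); right; unfold sqA, sqB; simpl; split; f_equal; lia.
  - exists ((a,b),false); left; unfold sqA, sqB; simpl; split; f_equal; lia.
  - exists ((a,b+1),true); right; unfold sqA, sqB; simpl; split; f_equal; lia.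
  - exists ((a,b),true); left; unfold sqA, sqB; simpl; split; f_equal; lia. Qed.

Definition gc_walk (g : nat -> pt) (L : nat) :=
  forall t, (t < L)%nat -> exists e, GC_edge occ e /\ joins e (g t) (g (S t)).
Lemma gc_walk_walk g L : gc_walk g L -> is_walk g L.
Proof. intros H t Ht; destruct (H t Ht) as [e [_ He]]; exists e; auto. Qed.

Lemma gc_walk_edge g L t e : gc_walk g L -> (t < L)%nat -> joinsb e (g t) (g (S t)) = true -> GC_edge occ e.
Proof. intros H Ht Hj. destruct (H t Ht) as [e' [H1 H2]]. apply (reflect_iff _ _ (joinsb_spec _ _ _)) in Hj.
  rewrite (joins_uniq _ _ _ _ Hj H2); auto. Qed.

Lemma gc_walk_in_box g L t : gc_walk g L -> (t < L)%nat -> in_box (g t) /\ in_box (g (S t)).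
Proof. intros H Ht; destruct (H t Ht) as [e [H1 H2]]; eapply joins_in_box; eauto. Qed.

Lemma edge_count_zero g L e : (forall t, (t < L)%nat -> joinsb e (g t) (g (S t)) = false) ->
  edge_count g L e = 0.
Proof. intro H; unfold edge_count, step_count; apply sumN_zero; intros t Ht; rewrite H; auto. Qed.

Lemma ray_parity_across g L e : is_walk g L -> closed_walk g L ->
  ray_parity g L (sqA e) = xorb (ray_parity g L (sqB e)) (Z.odd (edge_count g L e)).
Proof. intros Hw Hc. destruct e as [[x y] [|]]; unfold sqA, sqB; simpl.
  - rewrite (ray_parity_step_y g L x (y-1) y Hw Hc) by lia.
    destruct (ray_parity g L (x,y)), (Z.odd _); reflexivity.
  - rewrite (ray_parity_step_x g L (x-1) y x) by lia.
    destruct (ray_parity g L (x,y)), (Z.odd _); reflexivity. Qed.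

Lemma ray_parity_plus_adj g L s t : is_walk g L -> closed_walk g L -> plus_adj s t ->
  exists e, side_of e s /\ side_of e t /\
    ray_parity g L s = xorb (ray_parity g L t) (Z.odd (edge_count g L e)).
Proof. intros Hw Hc H. destruct (plus_adj_edge s t H) as [e [[-> ->]|[-> ->]]]; exists e;
  repeat split; auto using side_A, side_B; rewrite (ray_parity_across g L e Hw Hc);
  destruct (ray_parity g L (sqB e)), (Z.odd _); reflexivity. Qed.

Lemma ray_parity_outer_vacant g L s : gc_walk g L -> closed_walk g L -> outer_vacant s ->
  ray_parity g L s = false.
Proof. intros Hg Hc H. induction H.
  - unfold ray_parity, step_count. rewrite sumN_zero; auto. intros t Ht.
    destruct (gc_walk_in_box g L t Hg Ht) as [[H1 _] _].
    destruct (crosses_ray far_sq (g t) (g (S t))) eqn:E; auto. unfold crosses_ray, far_sq in E; simpl in E.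
    apply andb_true_iff in E; destruct E as [E _]; apply andb_true_iff in E; destruct E as [_ E].
    apply Z.ltb_lt in E; lia.
  - destruct (ray_parity_plus_adj g L s t (gc_walk_walk _ _ Hg) Hc H0) as [e [H2 [H3 H4]]].
    rewrite H4, IHouter_vacant.
    rewrite edge_count_zero; auto. intros t0 Ht0. destruct (joinsb e (g t0) (g (S t0))) eqn:E; auto.
    apply (gc_walk_edge g L t0 e Hg Ht0) in E. apply GC_edge_iff in E.
    apply side_of_iff in H2; apply side_of_iff in H3. apply outer_vacant_not_C0 in H1.
    exfalso. destruct E as [E|E]; destruct H2 as [H2|H2]; destruct H3 as [H3|H3]; subst;
      try contradiction; unfold plus_adj in H0; destruct e as [[x y] [|]]; unfold sqA, sqB in *;
      simpl in *; lia.
Qed.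

Definition cycle_walk (C : list pt) := (0 < length C)%nat /\ gc_walk (cyc_at C) (length C).
Lemma closed_cyc_at C : (0 < length C)%nat -> closed_walk (cyc_at C) (length C).
Proof. intro H; unfold closed_walk, cyc_at. rewrite Nat.Div0.mod_same, Nat.Div0.mod_0_l; auto. Qed.

Lemma is_cycle_walk C : is_cycle occ C -> cycle_walk C.
Proof. intros [H1 [H2 H3]]; split; [lia|]. intros t Ht. destruct (H3 t Ht) as [e [He1 He2]].
  exists e; split; auto. rewrite cyc_at_lt by auto. rewrite <- cyc_at_nxt; auto. Qed.

Lemma cycle_edge_iff C e : cycle_edge C e <->
  exists t, (t < length C)%nat /\ joinsb e (cyc_at C t) (cyc_at C (S t)) = true.
Proof. unfold cycle_edge; split; intros [t [Ht H]]; exists t; split; auto.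
  - rewrite cyc_at_lt by auto; rewrite <- cyc_at_nxt. apply (reflect_iff _ _ (joinsb_spec _ _ _)); auto.
  - rewrite cyc_at_lt in H by auto; rewrite <- cyc_at_nxt in H.
    apply (reflect_iff _ _ (joinsb_spec _ _ _)); auto. Qed.

Lemma cycle_edge_GC C e : cycle_walk C -> cycle_edge C e -> GC_edge occ e.
Proof. intros [_ H] He. apply cycle_edge_iff in He; destruct He as [t [Ht He]].
  eapply gc_walk_edge; eauto. Qed.

Lemma cycle_edge_ends C e : cycle_walk C -> cycle_edge C e -> In (fst (ends e)) C /\ In (snd (ends e)) C.
Proof. intros [H0 _] He. apply cycle_edge_iff in He; destruct He as [t [Ht He]].
  apply (reflect_iff _ _ (joinsb_spec _ _ _)) in He. pose proof (cyc_at_in C t H0).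
  pose proof (cyc_at_in C (S t) H0).
  destruct He as [[<- <-]|[<- <-]]; auto. Qed.

Lemma edge_count_off_cycle C e : ~ cycle_edge C e -> edge_count (cyc_at C) (length C) e = 0.
Proof. intro H. apply edge_count_zero. intros t Ht. destruct (joinsb e _ _) eqn:E; auto.
  exfalso; apply H, cycle_edge_iff; eauto. Qed.

Definition cyc_parity C s := ray_parity (cyc_at C) (length C) s.
Lemma cyc_parity_outer_vacant C s : cycle_walk C -> outer_vacant s -> cyc_parity C s = false.
Proof. intros [H1 H2] H; apply ray_parity_outer_vacant; auto using closed_cyc_at. Qed.

Lemma cyc_parity_across C e : cycle_walk C ->
  cyc_parity C (sqA e) = xorb (cyc_parity C (sqB e)) (Z.odd (edge_count (cyc_at C) (length C) e)).
Proof. intros [H1 H2]; apply ray_parity_across; auto using closed_cyc_at, gc_walk_walk. Qed.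

Lemma cyc_parity_off_edge C e : cycle_walk C -> ~ cycle_edge C e ->
  cyc_parity C (sqA e) = cyc_parity C (sqB e).
Proof. intros H1 H2. rewrite cyc_parity_across, edge_count_off_cycle; auto.
  destruct (cyc_parity C (sqB e)); auto. Qed.

(* A square in the same component as the cell [x] when [x] is off the cycle. *)
Definition cell_sq (x : cell) : pt := match x with Sq c => c | Ed e => fst e | Vx v => v end.
Lemma not_cycle_edge_at C e v : cycle_walk C -> ~ In v C -> (v = fst (ends e) \/ v = snd (ends e)) ->
  ~ cycle_edge C e.
Proof. intros H1 H2 H3 H4. apply cycle_edge_ends in H4; auto. destruct H3; subst; tauto. Qed.

Lemma cyc_parity_incident C x y : cycle_walk C -> off_cycle C x -> off_cycle C y -> incident x y ->
  cyc_parity C (cell_sq x) = cyc_parity C (cell_sq y).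
Proof. intros HC Hx Hy Hi.
  assert (SE : forall c e, side_of e c -> ~ cycle_edge C e -> cyc_parity C c = cyc_parity C (fst e)).
  { intros c e H1 H2. apply side_of_iff in H1. destruct H1 as [->| ->]; auto.
    change (cyc_parity C (sqB e) = cyc_parity C (sqA e)). rewrite (cyc_parity_off_edge C e); auto. }
  assert (EV : forall e v,
  ~ cycle_edge C e -> ~ In v C -> (v = fst (ends e) \/ v = snd (ends e)) -> cyc_parity C (fst e) =
  cyc_parity C v).
  { intros e v H1 H2 H3. destruct e as [[a b] [|]]; simpl in *; destruct H3 as [->| ->]; auto.
    - pose proof (cyc_parity_off_edge C ((a+1,b),false) HC) as P. unfold sqA, sqB in P; simpl in P.
      replace (a + 1 - 1) with a in P by lia. symmetry; apply P. eapply not_cycle_edge_at; eauto; simpl; auto.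
    - pose proof (cyc_parity_off_edge C ((a,b+1),true) HC) as P. unfold sqA, sqB in P; simpl in P.
      replace (b + 1 - 1) with b in P by lia. symmetry; apply P.
      eapply not_cycle_edge_at; eauto; simpl; auto. }
  destruct x as [c|e|v], y as [c'|e'|v']; simpl in *; try contradiction.
  - apply SE; auto.
  - symmetry; apply SE; auto.
  - apply EV; auto.
  - symmetry; apply EV; auto.
Qed.

Lemma cyc_parity_component C x y : cycle_walk C -> off_cycle C x -> same_component C x y ->
  cyc_parity C (cell_sq x) = cyc_parity C (cell_sq y).
Proof. intros HC Hx H. apply clos_rt_rt1n in H. induction H; auto.
  destruct H as [H1 [H2 H3]]. rewrite (cyc_parity_incident C x y); auto. Qed.

Lemma component_cell_sq C x : cycle_walk C -> off_cycle C x -> same_component C x (Sq (cell_sq x)).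
Proof. intros HC Hx. destruct x as [c|e|v]; simpl.
  - apply rt_refl.
  - apply rt_step; repeat split; auto. simpl. apply side_A.
  - apply rt_trans with (Ed (v,true)); apply rt_step; repeat split; simpl; auto.
    all: try (eapply not_cycle_edge_at; eauto; simpl; auto).
Qed.

Lemma ray_parity_crossing g L s : ray_parity g L s = true ->
  exists t, (t < L)%nat /\ crosses_ray s (g t) (g (S t)) = true.
Proof. intro H.
  destruct (classic (exists t, (t < L)%nat /\ crosses_ray s (g t) (g (S t)) = true)) as [E|E]; auto.
  exfalso. unfold ray_parity, step_count in H. rewrite sumN_zero in H; [discriminate|]. intros t Ht.
  destruct (crosses_ray s (g t) (g (S t))) eqn:Q; auto. exfalso; apply E; eauto. Qed.

Lemma cycle_vertex_in_box C v : cycle_walk C -> In v C -> in_box v.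
Proof. intros [H0 H] Hv. apply in_cyc_at in Hv; destruct Hv as [t [Ht <-]].
  apply (gc_walk_in_box _ _ t H Ht). Qed.

Lemma odd_parity_east_box C s : cycle_walk C -> cyc_parity C s = true ->
  fst s <= radius /\ -radius <= snd s <= radius.
Proof. intros [H0 H] Hp. apply ray_parity_crossing in Hp. destruct Hp as [t [Ht Hv]].
  destruct (gc_walk_in_box _ _ t H Ht) as [[B1 B2] [B3 B4]]. unfold crosses_ray in Hv.
  repeat (rewrite andb_true_iff in Hv || rewrite orb_true_iff in Hv). rewrite !Z.eqb_eq, Z.ltb_lt in Hv.
  destruct Hv as [[? ?] [[? ?]|[? ?]]]; lia. Qed.

Lemma odd_parity_box C s : cycle_walk C -> cyc_parity C s = true ->
  -radius - 1 <= fst s <= radius /\ -radius <= snd s <= radius.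
Proof. intros HC Hp. pose proof (odd_parity_east_box C s HC Hp). split; [|lia]. split; [|lia].
  destruct (Z_le_gt_dec (-radius-1) (fst s)); auto. exfalso. destruct s as [x y]; simpl in *.
  assert (A : forall n : nat, forall y', y' = radius + 1 - Z.of_nat n -> cyc_parity C (x, y') = false).
  { induction n; intros y' Hy'.
    - destruct (cyc_parity C (x,y')) eqn:E; auto. apply odd_parity_east_box in E; auto. simpl in E; lia.
    - assert (Q : ~ cycle_edge C ((x, y'+1), true)).
      { eapply not_cycle_edge_at; eauto. intro Hin; apply (cycle_vertex_in_box C) in Hin; auto.
        unfold in_box in Hin; simpl in Hin; lia. }
      destruct HC as [HC0 HC1]. unfold cyc_parity.
      rewrite (ray_parity_step_y _ _ x y' (y'+1) (gc_walk_walk _ _ HC1) (closed_cyc_at _ HC0)) by lia.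
      fold (cyc_parity C (x, y'+1)). rewrite IHn by lia. rewrite edge_count_off_cycle by auto. reflexivity. }
  assert (y <= radius) by lia. rewrite (A (Z.to_nat (radius + 1 - y)) y) in Hp by lia. discriminate. Qed.

Definition zrange (a : Z) (n : nat) : list Z := map (fun i => a + Z.of_nat i) (seq 0 n).
Lemma in_zrange a n z : a <= z < a + Z.of_nat n -> In z (zrange a n).
Proof. intro H. unfold zrange. apply in_map_iff. exists (Z.to_nat (z - a)). split; [lia|].
  apply in_seq; lia. Qed.

Definition box_cells : list cell :=
  flat_map (fun x => flat_map (fun y => [Sq (x,y); Ed ((x,y),true); Ed ((x,y),false); Vx (x,y)])
    (zrange (-radius) (Z.to_nat (2*radius+1)))) (zrange (-radius-1) (Z.to_nat (2*radius+2))).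
Lemma in_box_cells x : -radius - 1 <= fst (cell_sq x) <= radius ->
  -radius <= snd (cell_sq x) <= radius -> In x box_cells.
Proof. intros H1 H2. pose proof radius_nonneg. unfold box_cells. apply in_flat_map.
  exists (fst (cell_sq x)). split.
  apply in_zrange; lia. apply in_flat_map. exists (snd (cell_sq x)); split. apply in_zrange; lia.
  destruct x as [[a b]|[[a b] o]|[a b]]; simpl; [|destruct o|]; simpl; tauto. Qed.

Lemma odd_component_finite C x : cycle_walk C -> off_cycle C x -> cyc_parity C (cell_sq x) = true ->
  finite_set (same_component C x).
Proof. intros HC Hx Hp. exists box_cells. intros y Hy. pose proof (cyc_parity_component C x y HC Hx Hy).
  rewrite Hp in H.
  symmetry in H; apply odd_parity_box in H; auto. apply in_box_cells; tauto. Qed.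

Lemma plus_adj_same_component C s t : cycle_walk C -> ~ C0 occ s -> ~ C0 occ t -> plus_adj s t ->
  same_component C (Sq s) (Sq t).
Proof. intros HC Hs Ht H. destruct (plus_adj_edge s t H) as [e He].
  assert (Hne : ~ cycle_edge C e).
  { intro Q. apply cycle_edge_GC in Q; auto. apply GC_edge_iff in Q.
    destruct He as [[-> ->]|[-> ->]]; tauto. }
  apply rt_trans with (Ed e); apply rt_step; repeat split; simpl; auto;
  destruct He as [[-> ->]|[-> ->]]; auto using side_A, side_B. Qed.

Lemma outer_vacant_reaches_far C s : cycle_walk C -> outer_vacant s -> same_component C (Sq s) (Sq far_sq).
Proof. intros HC H; induction H; [apply rt_refl|]. apply rt_trans with (Sq t); auto.
  apply plus_adj_same_component; auto. apply outer_vacant_not_C0; auto. Qed.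

Lemma list_bound (l : list cell) : exists N, forall c, In (Sq c) l -> fst c < N.
Proof. induction l as [|x l [N HN]]; [exists 0; simpl; tauto|].
  exists (Z.max N (fst (cell_sq x) + 1)). intros c [H|H]; [subst; simpl; lia|]. specialize (HN c H); lia. Qed.

Lemma outer_vacant_component_infinite C s : cycle_walk C -> outer_vacant s ->
  ~ finite_set (same_component C (Sq s)).
Proof. intros HC H [l Hl]. destruct (list_bound l) as [N HN].
  assert (A : forall n : nat, same_component C (Sq far_sq) (Sq (radius + 1 + Z.of_nat n, 0))).
  { induction n. replace (radius + 1 + Z.of_nat 0) with (radius+1) by lia; apply rt_refl.
    apply rt_trans with (Sq (radius + 1 + Z.of_nat n, 0)); auto.
    apply plus_adj_same_component; auto; try (apply beyond_radius_not_C0; simpl; lia).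
    unfold plus_adj; simpl; lia. }
  pose proof radius_nonneg.
  specialize (HN _ (Hl _ (rt_trans _ _ _ _ _ (outer_vacant_reaches_far C s HC H)
    (A (Z.to_nat (N + Z.abs radius)))))).
  simpl in HN. lia. Qed.

Lemma left_right_sqAB d : (left_sq d = sqA (dart_edge d) /\
  right_sq d = sqB (dart_edge d)) \/ (left_sq d = sqB (dart_edge d) /\ right_sq d = sqA (dart_edge d)).
Proof. destruct d as [[x y] o]; destruct o; unfold left_sq, right_sq, dart_edge, sqA, sqB; simpl;
  first [left; split; f_equal; lia | right; split; f_equal; lia]. Qed.

Lemma dart_edge_GC d : bdart d -> GC_edge occ (dart_edge d).
Proof. intro HD. apply GC_edge_iff.
  destruct (left_right_sqAB d) as [[<- _]|[<- _]]; [left|right]; apply HD. Qed.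

Lemma cyc_parity_left_right C d : cycle_walk C ->
  cyc_parity C (left_sq d) = xorb (cyc_parity C (right_sq d)) (Z.odd (edge_count (cyc_at C) (length C)
  (dart_edge d))).
Proof. intro HC.
  destruct (left_right_sqAB d) as [[-> ->]|[-> ->]]; rewrite (cyc_parity_across C (dart_edge d) HC); auto.
  destruct (cyc_parity C (sqB (dart_edge d))), (Z.odd _); reflexivity. Qed.

Lemma same_component_across C e s t : ~ cycle_edge C e -> side_of e s -> side_of e t ->
  same_component C (Sq s) (Sq t).
Proof. intros H1 H2 H3. apply rt_trans with (Ed e); apply rt_step; repeat split; simpl; auto. Qed.

Lemma orbit_cycle_walk d : bdart d -> cycle_walk (orbit_cycle d).
Proof. intro HD. split. rewrite length_orbit_cycle; apply period_pos. intros t Ht.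
  rewrite !cyc_at_orbit by auto.
  exists (dart_edge (adv t d)). split. apply GC_edge_iff.
  destruct (left_right_sqAB (adv t d)) as [[<- _]|[<- _]]; left + right; apply (adv_bdart t d HD).
  rewrite src_adv_S; apply dart_edge_joins. Qed.

Lemma orbit_cycle_edge_iff d e : bdart d -> (cycle_edge (orbit_cycle d) e <->
  exists t, (t < period d)%nat /\ e = dart_edge (adv t d)).
Proof. intro HD. rewrite cycle_edge_iff, length_orbit_cycle. split; intros [t [Ht H]]; exists t; split; auto;
  rewrite !cyc_at_orbit, src_adv_S in * by auto; apply joinsb_dart_edge; auto. Qed.

Lemma orbit_edge_count d t : bdart d ->
  edge_count (cyc_at (orbit_cycle d)) (length (orbit_cycle d)) (dart_edge (adv t d)) = 1.
Proof. intro HD. rewrite (adv_mod d t HD). set (t0 := (t mod period d)%nat).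
  assert (Ht0 : (t0 < period d)%nat) by (apply Nat.mod_upper_bound; pose proof (period_pos d); lia).
  unfold edge_count, step_count. rewrite length_orbit_cycle. apply (sumN_single _ _ t0); auto.
  - intros t' _; destruct (joinsb _ _ _); auto.
  - rewrite !cyc_at_orbit, src_adv_S by auto. rewrite (proj2 (joinsb_dart_edge _ _)); auto.
  - intros t' Ht' E. rewrite !cyc_at_orbit, src_adv_S in E by auto.
    destruct (joinsb _ _ _) eqn:Q; [|discriminate].
    apply joinsb_dart_edge in Q. apply bdart_edge_inj in Q; try apply adv_bdart; auto.
    apply adv_inj in Q; auto. Qed.

Lemma orbit_parity_sides d t : bdart d ->
  cyc_parity (orbit_cycle d) (left_sq (adv t d)) = true /\
  cyc_parity (orbit_cycle d) (right_sq (adv t d)) = false.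
Proof. intro HD. assert (R : cyc_parity (orbit_cycle d) (right_sq (adv t d)) = false).
  { apply cyc_parity_outer_vacant. apply orbit_cycle_walk; auto. apply (adv_bdart t d HD). }
  split; auto. rewrite cyc_parity_left_right by (apply orbit_cycle_walk; auto).
  rewrite R, orbit_edge_count; auto. Qed.

Lemma orbit_cycle_edge_dart d e : bdart d -> cycle_edge (orbit_cycle d) e ->
  exists t, e = dart_edge (adv t d).
Proof. intros HD H; apply orbit_cycle_edge_iff in H; auto; destruct H as [t [_ H]]; eauto. Qed.

Lemma orbit_cycle_edge_adv d t : bdart d -> cycle_edge (orbit_cycle d) (dart_edge (adv t d)).
Proof. intro HD. apply orbit_cycle_edge_iff; auto. exists (t mod period d)%nat; split.
  apply Nat.mod_upper_bound; pose proof (period_pos d); lia. rewrite <- adv_mod; auto. Qed.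

Lemma orbit_cycle_edge_outer d e : bdart d -> cycle_edge (orbit_cycle d) e ->
  exists c, side_of e c /\ outer_vacant c.
Proof. intros HD H. apply orbit_cycle_edge_dart in H; auto. destruct H as [t ->].
  exists (right_sq (adv t d)); split.
  apply side_right_sq. apply (adv_bdart t d HD). Qed.

Lemma orbit_parity_off d dl : bdart d -> bdart dl -> ~ cycle_edge (orbit_cycle d) (dart_edge dl) ->
  cyc_parity (orbit_cycle d) (left_sq dl) = false /\ cyc_parity (orbit_cycle d) (right_sq dl) = false.
Proof. intros HD HDl H.
  assert (R : cyc_parity (orbit_cycle d) (right_sq dl) = false) by (apply cyc_parity_outer_vacant;
  [apply orbit_cycle_walk; auto | apply HDl]).
  split; auto. rewrite cyc_parity_left_right by (apply orbit_cycle_walk; auto).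
  rewrite R, edge_count_off_cycle; auto. Qed.

Definition east_edge (s : pt) : edge := ((fst s + 1, snd s), false).
Definition east_sq (s : pt) : pt := (fst s + 1, snd s).
Lemma east_edge_sides s : side_of (east_edge s) s /\ side_of (east_edge s) (east_sq s).
Proof. destruct s as [x y]; unfold east_edge, east_sq; simpl; split; [right|left]; f_equal; lia. Qed.

Lemma east_induction (P : pt -> Prop) : (forall s, radius < fst s -> P s) ->
  (forall s, fst s <= radius -> P (east_sq s) -> P s) -> forall s, P s.
Proof. intros H1 H2. assert (A : forall n : nat, forall s, Z.to_nat (radius + 1 - fst s) = n -> P s).
  { induction n; intros s Hs. apply H1; lia. apply H2; [lia|]. apply IHn. unfold east_sq; simpl; lia. }
  intro s; apply (A _ s eq_refl). Qed.

Lemma even_component_infinite d s : bdart d -> cyc_parity (orbit_cycle d) s = false ->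
  ~ finite_set (same_component (orbit_cycle d) (Sq s)).
Proof. intro HD. pose proof (orbit_cycle_walk d HD) as HC. revert s.
  apply (east_induction (fun s => cyc_parity (orbit_cycle d) s = false ->
    ~ finite_set (same_component (orbit_cycle d) (Sq s)))).
  - intros s Hs _. apply outer_vacant_component_infinite; auto. apply outer_vacant_beyond_radius; auto.
  - intros s Hs IH Hp. destruct (classic (cycle_edge (orbit_cycle d) (east_edge s))) as [E|E].
    + apply orbit_cycle_edge_dart in E; auto. destruct E as [t Et].
      destruct (orbit_parity_sides d t HD) as [P1 P2].
      pose proof (proj1 (east_edge_sides s)) as S1. rewrite Et in S1. apply side_dart_edge in S1.
      destruct S1 as [S1|S1].
      * rewrite <- S1 in P1; congruence.
      * apply outer_vacant_component_infinite; auto. rewrite S1. apply (adv_bdart t d HD).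
    + intros [l Hl]. apply IH.
      * destruct s as [x y]. unfold east_sq, east_edge in *; simpl in *.
        pose proof (cyc_parity_left_right (orbit_cycle d) ((x+1,y),DN) HC) as Q.
        unfold left_sq, right_sq, dart_edge in Q; simpl in Q.
        replace (x+1-1) with x in Q by lia. rewrite edge_count_off_cycle in Q by exact E. rewrite Hp in Q.
        destruct (cyc_parity (orbit_cycle d) (x+1,y)); simpl in Q; auto.
      * exists l. intros x Hx. apply Hl. apply rt_trans with (Sq (east_sq s)); auto.
        apply (same_component_across _ (east_edge s)); auto; apply east_edge_sides.
Qed.

Lemma cyc_parity_east C s : cycle_walk C -> ~ cycle_edge C (east_edge s) ->
  cyc_parity C (east_sq s) = cyc_parity C s.
Proof. intros HC E. destruct s as [x y]. unfold east_sq, east_edge in *; simpl in *.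
  pose proof (cyc_parity_left_right C ((x+1,y),DN) HC) as Q.
  unfold left_sq, right_sq, dart_edge in Q; simpl in Q.
  replace (x+1-1) with x in Q by lia. rewrite edge_count_off_cycle in Q by exact E. rewrite Q.
  destruct (cyc_parity C (x+1,y)); reflexivity. Qed.

Lemma orbit_parities_disjoint d1 d2 : bdart d1 -> bdart d2 ->
  (forall e, cycle_edge (orbit_cycle d1) e -> ~ cycle_edge (orbit_cycle d2) e) ->
  forall s, cyc_parity (orbit_cycle d1) s = true -> cyc_parity (orbit_cycle d2) s = true -> False.
Proof. intros H1 H2 Hdis. pose proof (orbit_cycle_walk d1 H1) as C1.
  pose proof (orbit_cycle_walk d2 H2) as C2.
  apply (east_induction (fun s =>
    cyc_parity (orbit_cycle d1) s = true -> cyc_parity (orbit_cycle d2) s = true -> False)).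
  - intros s Hs P1 _. rewrite cyc_parity_outer_vacant in P1; auto. discriminate.
    apply outer_vacant_beyond_radius; auto.
  - intros s Hs IH P1 P2. destruct (classic (cycle_edge (orbit_cycle d1) (east_edge s))) as [E1|E1].
    + pose proof (Hdis _ E1) as E2. apply orbit_cycle_edge_dart in E1; auto. destruct E1 as [t Et].
      rewrite Et in E2. destruct (orbit_parity_off d2 (adv t d1) H2 (adv_bdart t d1 H1) E2) as [Q1 Q2].
      pose proof (proj1 (east_edge_sides s)) as S1. rewrite Et in S1. apply side_dart_edge in S1.
      destruct S1 as [S1|S1]; rewrite S1 in P2; congruence.
    + destruct (classic (cycle_edge (orbit_cycle d2) (east_edge s))) as [E2|E2].
      * assert (E1' : ~ cycle_edge (orbit_cycle d1) (east_edge s)) by auto.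
        apply orbit_cycle_edge_dart in E2; auto. destruct E2 as [t Et].
        rewrite Et in E1'. destruct (orbit_parity_off d1 (adv t d2) H1 (adv_bdart t d2 H2) E1') as [Q1 Q2].
        pose proof (proj1 (east_edge_sides s)) as S1. rewrite Et in S1. apply side_dart_edge in S1.
        destruct S1 as [S1|S1]; rewrite S1 in P1; congruence.
      * apply IH; rewrite cyc_parity_east; auto.
Qed.

Lemma enclosing_orbit a : ~ outer_vacant a -> exists d, bdart d /\ cyc_parity (orbit_cycle d) a = true.
Proof. revert a.
  apply (east_induction (fun a => ~ outer_vacant a -> exists d,
  bdart d /\ cyc_parity (orbit_cycle d) a = true)).
  - intros s Hs H; exfalso; apply H, outer_vacant_beyond_radius; auto.
  - intros s Hs IH Hn. destruct (classic (outer_vacant (east_sq s))) as [Ht|Ht].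
    + assert (Hs0 : C0 occ s). { apply NNPP; intro Q. apply Hn. apply (ov_step _ (east_sq s)); auto.
        unfold plus_adj, east_sq; simpl; lia. }
      set (dd := ((fst s + 1, snd s), DN)).
      assert (Hl : left_sq dd = s) by (destruct s; unfold dd, left_sq; simpl; f_equal; lia).
      assert (Hr : right_sq dd = east_sq s) by (destruct s; unfold dd, right_sq, east_sq; simpl;
      f_equal; lia).
      assert (HD : bdart dd) by (unfold bdart; rewrite Hl, Hr; auto).
      exists dd; split; auto. rewrite <- Hl. apply (orbit_parity_sides dd 0 HD).
    + destruct (IH Ht) as [d [HD Hp]]. exists d; split; auto. rewrite <- cyc_parity_east; auto.
      apply orbit_cycle_walk; auto. intro E. apply orbit_cycle_edge_outer in E; auto.
      destruct E as [c [Hc1 Hc2]].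
      pose proof (east_edge_sides s) as [S1 S2]. apply side_of_iff in Hc1, S1, S2.
      destruct Hc1 as [->| ->]; destruct S1 as [S1|S1]; destruct S2 as [S2|S2];
        try (rewrite <- S1 in Hc2; contradiction); try (rewrite <- S2 in Hc2; contradiction).
      all: rewrite <- S1 in S2; unfold east_sq in S2; destruct s; simpl in S2; inj_pairs; lia.
Qed.

Lemma orbit_interior_iff d x : bdart d -> (in_interior (orbit_cycle d) x <->
  off_cycle (orbit_cycle d) x /\ cyc_parity (orbit_cycle d) (cell_sq x) = true).
Proof. intro HD. pose proof (orbit_cycle_walk d HD) as HC. split.
  - intros [H1 H2]. split; auto. destruct (cyc_parity (orbit_cycle d) (cell_sq x)) eqn:E; auto. exfalso.
    apply (even_component_infinite d (cell_sq x) HD E). destruct H2 as [l Hl]. exists l. intros y Hy.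
    apply Hl.
    apply rt_trans with (Sq (cell_sq x)); auto. apply component_cell_sq; auto.
  - intros [H1 H2]. split; auto. apply odd_component_finite; auto. Qed.

Lemma outer_vacant_exterior C s : cycle_walk C -> outer_vacant s -> in_exterior C (Sq s).
Proof. intros HC H. split. exact I. apply outer_vacant_component_infinite; auto. Qed.

(** * Orbit cycles are simple *)

Lemma dart_edge_dir_inj w a b : dart_edge (w,a) = dart_edge (w,b) -> a = b.
Proof. intro H. destruct (dart_edge_eq _ _ H) as [E|E]. injection E; auto.
  exfalso. apply (f_equal src) in E. rewrite src_rev in E. apply (src_tgt_neq (w,b)); auto. Qed.

Definition flip_at g L w (o : dir) := Z.odd (edge_count g L (dart_edge (w,o))).
Lemma ray_parity_around g L w : is_walk g L -> closed_walk g L ->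
  ray_parity g L (sNW w) = xorb (ray_parity g L (sNE w)) (flip_at g L w DN) /\
  ray_parity g L (sSW w) = xorb (ray_parity g L (sNW w)) (flip_at g L w DW) /\
  ray_parity g L (sSE w) = xorb (ray_parity g L (sSW w)) (flip_at g L w DS) /\
  xorb (ray_parity g L (sSE w)) (ray_parity g L (sNE w)) = flip_at g L w DE.
Proof. intros Hw Hc. unfold flip_at.
  pose proof (ray_parity_across g L (dart_edge (w,DN)) Hw Hc) as P1.
  pose proof (ray_parity_across g L (dart_edge (w,DW)) Hw Hc) as P2.
  pose proof (ray_parity_across g L (dart_edge (w,DS)) Hw Hc) as P3.
  pose proof (ray_parity_across g L (dart_edge (w,DE)) Hw Hc) as P4.
  unfold sqA, sqB, dart_edge in P1, P2, P3, P4; simpl in P1, P2, P3, P4.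
  unfold sNE, sNW, sSW, sSE, dart_edge; simpl.
  destruct (ray_parity g L w), (ray_parity g L (fst w - 1, snd w)), (ray_parity g L (fst w - 1, snd w - 1)),
    (ray_parity g L (fst w, snd w - 1)), (Z.odd (edge_count g L (w,false))),
    (Z.odd (edge_count g L ((fst w - 1, snd w), true))),
    (Z.odd (edge_count g L ((fst w, snd w - 1), false))), (Z.odd (edge_count g L (w,true))); simpl in *;
    try discriminate; auto. Qed.

Lemma outer_even_status g L s : gc_walk g L -> closed_walk g L ->
  outer_even (status_of s) (ray_parity g L s) = true.
Proof. intros H1 H2. unfold outer_even. destruct (status_of s) eqn:E; auto. simpl.
  rewrite ray_parity_outer_vacant; auto. apply status_outer; auto. Qed.

Lemma local_parity_constraints g L w : gc_walk g L -> closed_walk g L ->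
  parities_consistent (ray_parity g L (sNE w)) (flip_at g L w) = true /\ outer_even_around (config_at w)
  (ray_parity g L (sNE w)) (flip_at g L w) = true.
Proof. intros H1 H2. destruct (ray_parity_around g L w (gc_walk_walk _ _ H1) H2) as [R1 [R2 [R3 R4]]].
  unfold parities_consistent, outer_even_around, parities_around, config_at.
  rewrite <- R1, <- R2, <- R3, R4. split.
  - destruct (flip_at g L w DE); reflexivity.
  - rewrite !outer_even_status; auto. Qed.

Lemma parities_consistent_ext p f f' : (forall o, f o = f' o) ->
  parities_consistent p f = parities_consistent p f'.
Proof. intro H; unfold parities_consistent, parities_around; rewrite !H; reflexivity. Qed.

Lemma outer_even_around_ext l p f f' : (forall o, f o = f' o) ->
  outer_even_around l p f = outer_even_around l p f'.
Proof. intro H; unfold outer_even_around, parities_around; rewrite !H; reflexivity. Qed.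

Lemma edge_count_simple_return g L w e : (2 <= L)%nat -> g O = w -> g L = w ->
  (forall t, (0 < t < L)%nat -> g t <> w) ->
  (w = fst (ends e) \/ w = snd (ends e)) ->
  edge_count g L e =
    (if joinsb e (g O) (g 1%nat) then 1 else 0) + (if joinsb e (g (L-1)%nat) (g L) then 1 else 0).
Proof. intros HL H0 HLw Hn He. unfold edge_count, step_count. rewrite sumN_two_ends; auto.
  - replace (S (L-1)) with L by lia; reflexivity.
  - intros t Ht1 Ht2. destruct (joinsb e (g t) (g (S t))) eqn:E; auto. exfalso.
    apply (reflect_iff _ _ (joinsb_spec _ _ _)) in E. pose proof (Hn t ltac:(lia)).
    pose proof (Hn (S t) ltac:(lia)).
    destruct E as [[E1 E2]|[E1 E2]]; destruct He as [He|He]; congruence. Qed.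

Lemma step_on_dir_edge w o d o' : d = (w,o') \/ d = dart_rev (w,o') ->
  (if joinsb (dart_edge (w,o)) (src d) (tgt d) then 1 else 0) = (if dir_eqb o o' then 1 else 0).
Proof. intro Hd. destruct (joinsb _ _ _) eqn:E; destruct (dir_eqb_spec o o'); auto.
  - apply joinsb_dart_edge in E. exfalso; apply n. apply (dart_edge_dir_inj w).
    destruct Hd as [->| ->]; auto. rewrite dart_edge_rev in E; auto.
  - subst. exfalso. assert (joinsb (dart_edge (w,o')) (src d) (tgt d) = true); [|congruence].
    apply joinsb_dart_edge. destruct Hd as [->| ->]; auto. rewrite dart_edge_rev; auto. Qed.

Lemma odd_two_bits (a b : bool) : Z.odd ((if a then 1 else 0) + (if b then 1 else 0)) = xorb a b.
Proof. destruct a, b; reflexivity. Qed.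

Lemma flip_at_simple_return g L din dout :
  (2 <= L)%nat -> closed_walk g L -> (forall t, (0 < t < L)%nat -> g t <> g O) ->
  src dout = g O -> tgt dout = g 1%nat -> src din = g (L-1)%nat -> tgt din = g L ->
  forall o, flip_at g L (g O) o = flips_through (snd din) (snd dout) o.
Proof.
  intros HL Hc Hn S1 T1 S0 T0 o.
  assert (Ein : din = dart_rev (g O, opp (snd din)))
    by (apply dart_rev_at_tgt; rewrite T0; exact Hc).
  assert (Eout : dout = (g O, snd dout)) by (apply dart_src; exact S1).
  unfold flip_at, flips_through. rewrite (edge_count_simple_return g L (g O)); auto.
  - rewrite <- T1, <- S0, <- T0. rewrite <- S1 at 2.
    rewrite (step_on_dir_edge (g O) o dout (snd dout)) by auto.
    rewrite (step_on_dir_edge (g O) o din (opp (snd din))) by auto.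
    rewrite odd_two_bits; apply xorb_comm.
  - unfold dart_edge; destruct o; simpl; [left|left|right|right]; try reflexivity;
      apply injective_projections; simpl; lia.
Qed.

Lemma simple_return_constraints g L din dout :
  gc_walk g L -> closed_walk g L -> (2 <= L)%nat -> (forall t, (0 < t < L)%nat -> g t <> g O) ->
  src dout = g O -> tgt dout = g 1%nat -> src din = g (L-1)%nat -> tgt din = g L ->
  parities_consistent (ray_parity g L (sNE (g O))) (flips_through (snd din) (snd dout)) = true /\
  outer_even_around (config_at (g O)) (ray_parity g L (sNE (g O)))
    (flips_through (snd din) (snd dout)) = true.
Proof.
  intros Hg Hc HL Hn S1 T1 S0 T0.
  pose proof (flip_at_simple_return g L din dout HL Hc Hn S1 T1 S0 T0) as Hfl.
  rewrite <- (parities_consistent_ext _ _ _ Hfl), <- (outer_even_around_ext _ _ _ _ Hfl).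
  apply local_parity_constraints; auto.
Qed.

(* If an orbit visited a vertex twice, the boundary walk [dl] from that vertex
   back to it would not end with the dart [d1] preceding its first dart; the
   local check at the vertex excludes this. *)
Lemma no_pinch g L (dl : nat -> dart) d1 :
  (2 <= L)%nat ->
  (forall t, (t < L)%nat -> bdart (dl t) /\ src (dl t) = g t /\ tgt (dl t) = g (S t)) ->
  g L = g O -> (forall t, (0 < t < L)%nat -> g t <> g O) ->
  bdart d1 -> next_dart d1 = dl O -> d1 <> dl (L-1)%nat -> False.
Proof.
  intros HL Hdl Hc Hn HD1 Hs Hne. set (w := g O).
  assert (Hg : gc_walk g L).
  { intros t Ht. destruct (Hdl t Ht) as [H1 [<- <-]].
    exists (dart_edge (dl t)); split; [apply dart_edge_GC, H1 | apply dart_edge_joins]. }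
  destruct (Hdl O ltac:(lia)) as [D0 [S0 T0]]. destruct (Hdl (L-1)%nat ltac:(lia)) as [DL [SL TL]].
  replace (S (L-1)) with L in TL by lia.
  assert (Tw1 : tgt d1 = w) by (rewrite <- src_next_dart, Hs; auto).
  assert (TwL : tgt (dl (L-1)%nat) = w) by (rewrite TL; auto).
  set (a1 := snd d1). set (a2 := snd (dl (L-1)%nat)). set (l := config_at w).
  assert (E0 : snd (dl O) = local_succ l a1) by (rewrite <- Hs; unfold next_dart; rewrite Tw1; auto).
  destruct (simple_return_constraints g L (dl (L-1)%nat) (dl O) Hg Hc HL Hn S0 T0 SL TL) as [K1 K2].
  fold w l a2 in K1, K2. rewrite E0 in K1, K2.
  assert (I1 : enters_boundary l a1 = true)
    by (unfold l; rewrite <- Tw1; apply enters_boundary_iff; auto).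
  assert (I2 : enters_boundary l a2 = true)
    by (unfold l; rewrite <- TwL; apply enters_boundary_iff; auto).
  assert (N : dir_eqb a1 a2 = false).
  { destruct (dir_eqb_spec a1 a2) as [E|]; auto. exfalso; apply Hne.
    rewrite (dart_rev_at_tgt d1 w Tw1), (dart_rev_at_tgt _ w TwL). fold a1 a2. rewrite E; auto. }
  pose proof (local_no_pinch l a1 a2 (ray_parity g L (sNE w))) as K.
  assert (V : valid_config l = true) by apply config_at_valid.
  rewrite V, I1, I2, N, K1, K2 in K. discriminate.
Qed.

Lemma adv_add_period d i : bdart d -> adv (i + period d) d = adv i d.
Proof. intro HD; rewrite adv_add, adv_period; auto. Qed.

Lemma src_adv_inj_lt d : bdart d -> forall k i j, (j - i = k)%nat -> (i < j)%nat -> (j < period d)%nat ->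
  src (adv i d) = src (adv j d) -> False.
Proof. intros HD k. induction k as [k IH] using (well_founded_induction lt_wf). intros i j Hk Hij Hj Hs.
  destruct (classic (exists t, (i < t < j)%nat /\ src (adv t d) = src (adv i d))) as [[t [Ht Et]]|Hno].
  { apply (IH (t - i)%nat ltac:(lia) i t); auto; lia. }
  destruct (Nat.eq_dec (j - i) 1) as [E1|E1].
  { replace j with (S i) in Hs by lia. rewrite src_adv_S in Hs. apply (src_tgt_neq (adv i d)); auto. }
  apply (no_pinch (fun t => src (adv (i + t) d)) (j - i) (fun t => adv (i + t) d) (adv (i + period d - 1) d)).
  - lia.
  - intros t Ht. split; [apply adv_bdart; auto|]. split; auto. rewrite <- src_adv_S. f_equal. f_equal. lia.
  - simpl. rewrite Nat.add_0_r. replace (i + (j - i))%nat with j by lia. auto.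
  - intros t Ht E. simpl in E. rewrite Nat.add_0_r in E. apply Hno. exists (i + t)%nat; split; auto. lia.
  - apply adv_bdart; auto.
  - rewrite <- adv_S. rewrite Nat.add_0_r.
    replace (S (i + period d - 1)) with (i + period d)%nat by (pose proof (period_pos d); lia).
    apply adv_add_period; auto.
  - intro E. apply (f_equal next_dart) in E. rewrite <- !adv_S in E.
    replace (S (i + period d - 1)) with (i + period d)%nat in E by (pose proof (period_pos d); lia).
    replace (S (i + (j - i - 1))) with j in E by lia. rewrite adv_add_period in E by auto.
    apply adv_inj in E; auto; lia.
Qed.

Lemma src_adv_inj d i j : bdart d -> (i < period d)%nat -> (j < period d)%nat ->
  src (adv i d) = src (adv j d) -> i = j.
Proof. intros HD Hi Hj E. destruct (Nat.lt_total i j) as [H|[H|H]]; auto; exfalso.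
  - apply (src_adv_inj_lt d HD (j - i) i j); auto.
  - apply (src_adv_inj_lt d HD (i - j) j i); auto. Qed.

Lemma period_ge3 d : bdart d -> (3 <= period d)%nat.
Proof. intro HD. pose proof (period_pos d). destruct (period d) as [|[|[|p]]] eqn:E; try lia; exfalso.
  - pose proof (adv_period d HD) as P. rewrite E in P. apply (f_equal src) in P. rewrite src_adv_S in P.
    apply (src_tgt_neq d); auto.
  - pose proof (adv_period d HD) as P. rewrite E in P.
    assert (Q : next_dart d = dart_rev d). { apply dart_eq_ends.
      rewrite src_next_dart, src_rev; auto. rewrite tgt_rev. rewrite <- src_next_dart.
      rewrite <- P at 2. reflexivity. }
    apply (bdart_rev d HD). rewrite <- Q. apply next_dart_bdart; auto. Qed.

Lemma nth_orbit_cycle d i : (i < period d)%nat -> nth i (orbit_cycle d) origin = src (adv i d).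
Proof. intro H; unfold orbit_cycle; rewrite nth_map_seq; auto. Qed.

Lemma orbit_cycle_is_cycle d : bdart d -> is_cycle occ (orbit_cycle d).
Proof. intro HD. split; [rewrite length_orbit_cycle; apply period_ge3; auto|]. split.
  - apply (NoDup_nth (orbit_cycle d) origin). rewrite length_orbit_cycle. intros i j Hi Hj E.
    rewrite !nth_orbit_cycle in E by auto.
    apply src_adv_inj in E; auto.
  - intros i Hi. rewrite length_orbit_cycle in Hi. exists (dart_edge (adv i d)). split.
    + apply GC_edge_iff.
      destruct (left_right_sqAB (adv i d)) as [[<- _]|[<- _]]; [left|right]; apply (adv_bdart i d HD).
    + rewrite cyc_at_nxt, cyc_at_orbit, nth_orbit_cycle, src_adv_S by auto. apply dart_edge_joins.
Qed.

Lemma adv_orbit_shift r a b : bdart r -> adv (b + a * (period r - 1)) (adv a r) = adv b r.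
Proof. intro HD. rewrite adv_adv. pose proof (period_pos r).
  replace (b + a * (period r - 1) + a)%nat with (b + a * period r)%nat by (destruct (period r); [lia|]; nia).
  rewrite adv_add, (adv_period_mul r a HD); auto. Qed.

(* An arc of the orbit of [x] to a second common vertex followed by an arc of
   the orbit of [y] back to [src y] would contradict [no_pinch]. *)
Lemma orbits_share_one_vertex x y : bdart x -> bdart y -> (forall m n, adv m x <> adv n y) -> src x = src y ->
  forall n m, src (adv n x) = src (adv m y) -> src (adv n x) = src x.
Proof. intros Hx Hy Hdis Hxy n0 m0 E0. apply NNPP; intro Hne.
  pose proof (period_pos x) as Px. pose proof (period_pos y) as Py.
  set (n := (n0 mod period x)%nat). set (m := (m0 mod period y)%nat).
  assert (Hn : (n < period x)%nat) by (apply Nat.mod_upper_bound; lia).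
  assert (Hm : (m < period y)%nat) by (apply Nat.mod_upper_bound; lia).
  assert (En : adv n0 x = adv n x) by (apply adv_mod; auto).
  assert (Em : adv m0 y = adv m y) by (apply adv_mod; auto).
  rewrite En, Em in E0. rewrite En in Hne.
  assert (n <> 0%nat) by (intro Q; rewrite Q in Hne; apply Hne; reflexivity).
  assert (m <> 0%nat) by (intro Q; rewrite Q in E0; apply Hne; rewrite E0; auto).
  set (L := (n + (period y - m))%nat).
  set (dl := fun t => if (t <? n)%nat then adv t x else adv (m + (t - n)) y).
  set (g := fun t => if (t <? n)%nat then src (adv t x) else src (adv (m + (t - n)) y)).
  apply (no_pinch g L dl (adv (period x - 1) x)).
  - unfold L; lia.
  - intros t Ht. unfold dl, g. destruct (Nat.ltb_spec t n); [split; [apply adv_bdart; auto|split; auto]|].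
    + destruct (Nat.ltb_spec (S t) n). rewrite src_adv_S; auto.
      replace t with (n - 1)%nat by lia. rewrite <- src_adv_S. replace (S (n - 1)) with n by lia.
      rewrite Nat.sub_diag, Nat.add_0_r; auto.
    + split; [apply adv_bdart; auto|]. split; auto. destruct (Nat.ltb_spec (S t) n); [lia|].
      rewrite <- src_adv_S. f_equal; f_equal; lia.
  - unfold g, L. destruct (Nat.ltb_spec (n + (period y - m)) n); [lia|]. destruct (Nat.ltb_spec 0 n); [|lia].
    replace (m + (n + (period y - m) - n))%nat with (period y) by lia. rewrite adv_period; auto.
  - intros t Ht. unfold g. destruct (Nat.ltb_spec 0 n); [|lia]. simpl. destruct (Nat.ltb_spec t n).
    + intro E. apply (src_adv_inj x t 0) in E; auto; lia.
    + intro E. rewrite Hxy in E. change (src y) with (src (adv 0 y)) in E.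
      apply (src_adv_inj y) in E; auto; unfold L in Ht; lia.
  - apply adv_bdart; auto.
  - unfold dl. destruct (Nat.ltb_spec 0 n); [|lia]. rewrite <- adv_S.
    replace (S (period x - 1)) with (period x) by lia.
    apply adv_period; auto.
  - unfold dl. destruct (Nat.ltb_spec (L - 1) n); [unfold L in *; lia|]. apply Hdis.
Qed.

Lemma adv_orbit_back d n : bdart d -> adv (n * (period d - 1)) (adv n d) = d.
Proof. intro HD. pose proof (adv_orbit_shift d n 0 HD) as H. simpl in H. auto. Qed.

Lemma period_adv d n : bdart d -> period (adv n d) = period d.
Proof. intro HD. pose proof (period_pos d). pose proof (period_pos (adv n d)). apply Nat.le_antisymm.
  - apply period_min; [apply adv_bdart; auto| lia |]. rewrite adv_adv, Nat.add_comm, adv_add_period; auto.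
  - apply period_min; auto. set (x := adv n d). set (k := (n * (period d - 1))%nat).
    assert (Ex : adv k x = d) by (apply adv_orbit_back; auto).
    assert (Dx : bdart x) by (apply adv_bdart; auto).
    rewrite <- Ex at 1. rewrite adv_adv, Nat.add_comm, <- adv_adv, adv_period; auto. Qed.

Lemma step_count_orbit_adv d n p : bdart d ->
  step_count (cyc_at (orbit_cycle (adv n d))) (length (orbit_cycle (adv n d))) p =
  step_count (cyc_at (orbit_cycle d)) (length (orbit_cycle d)) p.
Proof. intro HD. unfold step_count. rewrite !length_orbit_cycle, period_adv by auto.
  set (F := fun t => if p (src (adv t d)) (src (adv (S t) d)) then 1 else 0).
  transitivity (sumN (fun t => F (n + t)%nat) (period d)).
  - apply sumN_ext; intros t Ht. rewrite !cyc_at_orbit by (try apply adv_bdart; auto). unfold F.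
    rewrite !adv_adv. replace (t + n)%nat with (n + t)%nat by lia.
    replace (S t + n)%nat with (S (n + t)) by lia. auto.
  - rewrite sumN_periodic. apply sumN_ext; intros t Ht. rewrite !cyc_at_orbit by auto. auto.
    intro t. unfold F.
    rewrite !(adv_mod d (t + period d)), !(adv_mod d (S (t + period d))), (adv_mod d t),
    (adv_mod d (S t)) by auto.
    replace (S (t + period d)) with (S t + 1 * period d)%nat by lia.
    replace (t + period d)%nat with (t + 1 * period d)%nat by lia.
    rewrite !Nat.Div0.mod_add. auto. Qed.

Lemma cyc_parity_adv d n s : bdart d -> cyc_parity (orbit_cycle (adv n d)) s = cyc_parity (orbit_cycle d) s.
Proof. intro HD; unfold cyc_parity, ray_parity; rewrite step_count_orbit_adv; auto. Qed.

Lemma orbit_cycle_edge_any d e : bdart d -> (cycle_edge (orbit_cycle d) e <->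
  exists t, e = dart_edge (adv t d)).
Proof. intro HD; split. apply orbit_cycle_edge_dart; auto.
  intros [t ->]; apply orbit_cycle_edge_adv; auto. Qed.

Lemma in_orbit_cycle d v : bdart d -> (In v (orbit_cycle d) <-> exists t, v = src (adv t d)).
Proof. intro HD. split.
  - intro H. apply in_cyc_at in H; destruct H as [t [_ <-]]. rewrite cyc_at_orbit; eauto.
  - intros [t ->]. rewrite <- cyc_at_orbit by auto. apply cyc_at_in.
    rewrite length_orbit_cycle; apply period_pos. Qed.

Lemma orbit_cycle_edge_adv_iff d n e : bdart d -> (cycle_edge (orbit_cycle (adv n d)) e <->
  cycle_edge (orbit_cycle d) e).
Proof. intro HD. rewrite !orbit_cycle_edge_any by (try apply adv_bdart; auto). split.
  - intros [t ->]. rewrite adv_adv; eauto.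
  - intros [t ->]. exists (t + n * (period d - 1))%nat. rewrite <- adv_adv, adv_orbit_back; auto. Qed.

Lemma in_orbit_cycle_adv d n v : bdart d -> (In v (orbit_cycle (adv n d)) <-> In v (orbit_cycle d)).
Proof. intro HD. rewrite !in_orbit_cycle by (try apply adv_bdart; auto). split.
  - intros [t ->]. rewrite adv_adv; eauto.
  - intros [t ->]. exists (t + n * (period d - 1))%nat. rewrite <- adv_adv, adv_orbit_back; auto. Qed.

Lemma off_cycle_adv d n x : bdart d -> (off_cycle (orbit_cycle (adv n d)) x <-> off_cycle (orbit_cycle d) x).
Proof. intro HD. destruct x; simpl; auto; try tauto. rewrite orbit_cycle_edge_adv_iff; tauto.
  rewrite in_orbit_cycle_adv; tauto. Qed.

Lemma interior_adv d n x : bdart d -> (in_interior (orbit_cycle (adv n d)) x <->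
  in_interior (orbit_cycle d) x).
Proof. intro HD. rewrite !orbit_interior_iff by (try apply adv_bdart; auto).
  rewrite off_cycle_adv, cyc_parity_adv; tauto. Qed.

Fixpoint index_of (l : list dart) (d : dart) : nat :=
  match l with [] => O | x :: t => if dart_eq_dec x d then O else S (index_of t d) end.
Lemma index_of_inj l d d' : In d l -> In d' l -> index_of l d = index_of l d' -> d = d'.
Proof. induction l as [|x l IH]; simpl; [tauto|]. intros H1 H2 E.
  destruct (dart_eq_dec x d), (dart_eq_dec x d'); subst; auto; try discriminate.
  destruct H1; [contradiction|]. destruct H2; [contradiction|]. apply IH; auto. Qed.

Definition bdart_index d := index_of bdarts d.
Definition is_rep (d : dart) := bdart d /\ forall n, (bdart_index d <= bdart_index (adv n d))%nat.
Lemma rep_ex d : bdart d -> exists r, is_rep r /\ exists n, r = adv n d.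
Proof. intro HD. set (P := fun v => exists n, bdart_index (adv n d) = v).
  destruct (Wf_nat.dec_inh_nat_subset_has_unique_least_element P (fun n => classic _) (ex_intro _ _
  (ex_intro _ O eq_refl)))
    as [v [[[n0 Hn0] Hmin] _]].
  exists (adv n0 d). split; [split|eauto]. apply adv_bdart; auto. intros n. rewrite Hn0, adv_adv.
  apply Hmin. eexists; eauto. Qed.

Lemma rep_uniq r1 r2 n : is_rep r1 -> is_rep r2 -> r2 = adv n r1 -> r1 = r2.
Proof. intros [D1 H1] [D2 H2] E. apply (index_of_inj bdarts); try apply in_bdarts; auto.
  apply Nat.le_antisymm. unfold bdart_index in *. rewrite E; apply H1.
  rewrite <- (adv_orbit_back r1 n D1), <- E. apply H2. Qed.

Lemma reps_disjoint r1 r2 m n : is_rep r1 -> is_rep r2 -> adv m r1 = adv n r2 -> r1 = r2.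
Proof. intros H1 H2 E. apply (rep_uniq r1 r2 (n * (period r2 - 1) + m)); auto.
  rewrite <- adv_adv, E, adv_orbit_back; auto. apply H2. Qed.

Lemma orbit_rep d : bdart d -> exists r, is_rep r /\ exists n, d = adv n r.
Proof. intro HD. destruct (rep_ex d HD) as [r [Hr [n ->]]]. exists (adv n d); split; auto.
  exists (n * (period d - 1))%nat. rewrite adv_orbit_back; auto. Qed.

Definition reps : list dart := filter (fun d => dec (is_rep d)) bdarts.
Lemma in_reps r : In r reps <-> is_rep r.
Proof. unfold reps. rewrite filter_In, dec_true, in_bdarts. unfold is_rep; tauto. Qed.

Lemma NoDup_reps : NoDup reps.
Proof. apply NoDup_filter, NoDup_bdarts. Qed.

Definition boundary_cycles : list (list pt) := map orbit_cycle reps.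
Lemma in_boundary_cycles C : In C boundary_cycles <-> exists r, is_rep r /\ C = orbit_cycle r.
Proof. unfold boundary_cycles. rewrite in_map_iff.
  split; intros [r [H1 H2]]; exists r; rewrite in_reps in *; auto. Qed.

Definition bdart_edge (e : edge) := exists d, bdart d /\ dart_edge d = e.
Lemma edge_to_dart e a o : side_of e a -> side_of e o -> a <> o ->
  exists d, dart_edge d = e /\ left_sq d = a /\ right_sq d = o.
Proof. intros Ha Ho Hne. destruct (dart_edge_surj e) as [d0 <-].
  apply side_dart_edge in Ha; apply side_dart_edge in Ho.
  destruct Ha as [Ha|Ha]; destruct Ho as [Ho|Ho]; subst; try (exfalso; apply Hne; reflexivity).
  - exists d0; auto.
  - exists (dart_rev d0); rewrite dart_edge_rev, left_sq_rev, right_sq_rev; auto. Qed.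

Lemma C0_outer_vacant_neq a o : C0 occ a -> outer_vacant o -> a <> o.
Proof. intros H1 H2 ->. apply outer_vacant_not_C0 in H2; contradiction. Qed.

Lemma bdart_edge_outer e : bdart_edge e -> outer_boundary occ e.
Proof. intros [d [HD <-]]. split.
  - apply GC_edge_iff. destruct (left_right_sqAB d) as [[<- _]|[<- _]]; [left|right]; apply HD.
  - intros C HC. destruct (classic (cycle_edge C (dart_edge d))) as [E|E]; [left; auto|right].
    split; auto. intros Hf.
    apply (outer_vacant_component_infinite C (right_sq d)); [apply is_cycle_walk; auto| apply HD|].
    destruct Hf as [l Hl]. exists l. intros y Hy. apply Hl. apply rt_trans with (Sq (right_sq d)); auto.
    apply rt_step; repeat split; simpl; auto. apply side_right_sq. Qed.

(* If no side of [e] were outer vacant, [e] would lie inside the orbit cycle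
   enclosing its side in C(0). *)
Lemma outer_bdart_edge e : outer_boundary occ e -> bdart_edge e.
Proof. intros [HG Hall]. apply GC_edge_iff in HG.
  assert (Hsides : forall c,
  side_of e c -> C0 occ c -> (outer_vacant (sqA e) \/ outer_vacant (sqB e)) -> bdart_edge e).
  { intros c Hc HC0 HO.
    assert (Ho : exists o, side_of e o /\ outer_vacant o) by (destruct HO; eauto using side_A, side_B).
    destruct Ho as [o [Ho1 Ho2]].
    destruct (edge_to_dart e c o Hc Ho1 (C0_outer_vacant_neq c o HC0 Ho2)) as [d [E1 [E2 E3]]].
    exists d; split; auto. unfold bdart; rewrite E2, E3; auto. }
  destruct (classic (outer_vacant (sqA e) \/ outer_vacant (sqB e))) as [HO|HO].
  { destruct HG as [HG|HG]; [apply (Hsides (sqA e)) | apply (Hsides (sqB e))]; auto using side_A, side_B. }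
  exfalso. assert (Ha : exists a, side_of e a /\ C0 occ a) by (destruct HG; eauto using side_A, side_B).
  destruct Ha as [a [Ha1 Ha2]].
  destruct (enclosing_orbit a) as [d [HD Hp]]. { intro Q; apply outer_vacant_not_C0 in Q; contradiction. }
  assert (HC := orbit_cycle_walk d HD).
  assert (Hne : ~ cycle_edge (orbit_cycle d) e).
  { intro Q. apply orbit_cycle_edge_outer in Q; auto. destruct Q as [c [Q1 Q2]]. apply side_of_iff in Q1.
    apply HO; destruct Q1; subst; auto. }
  destruct (Hall (orbit_cycle d) (orbit_cycle_is_cycle d HD)) as [Q|[_ Q]]; [contradiction|].
  apply Q. apply odd_component_finite; auto. simpl. change (fst e) with (sqA e).
  apply side_of_iff in Ha1. destruct Ha1 as [-> | ->]; auto. rewrite cyc_parity_off_edge; auto. Qed.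

Lemma outer_iff e : outer_boundary occ e <-> bdart_edge e.
Proof. split; [apply outer_bdart_edge|apply bdart_edge_outer]. Qed.

Lemma union_iff e : union_edge boundary_cycles e <-> bdart_edge e.
Proof. split.
  - intros [C [HC He]]. apply in_boundary_cycles in HC. destruct HC as [r [Hr ->]].
    apply orbit_cycle_edge_dart in He; [|apply Hr].
    destruct He as [t ->]. exists (adv t r); split; auto. apply adv_bdart, Hr.
  - intros [d [HD <-]]. destruct (orbit_rep d HD) as [r [Hr [n ->]]]. exists (orbit_cycle r). split.
    apply in_boundary_cycles; eauto. apply orbit_cycle_edge_adv, Hr. Qed.

Lemma cycles_cover k : C0 occ k -> exists C, In C boundary_cycles /\ in_interior C (Sq k).
Proof. intro Hk. destruct (enclosing_orbit k) as [d [HD Hp]].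
  { intro Q; apply outer_vacant_not_C0 in Q; contradiction. }
  destruct (orbit_rep d HD) as [r [Hr [n ->]]]. exists (orbit_cycle r). split.
  apply in_boundary_cycles; eauto.
  rewrite <- (interior_adv r n) by apply Hr. apply orbit_interior_iff; auto. split; simpl; auto. Qed.

Lemma right_sq_vacant d : bdart d -> ~ occ (right_sq d).
Proof. intros [H1 H2] Ho. apply outer_vacant_not_C0 in H2. apply H2. apply (C0_star (left_sq d)); auto.
  apply left_right_star_adj. Qed.

Lemma cycle_edges_boundary C e : In C boundary_cycles -> cycle_edge C e ->
     boundary_edge occ e /\
     (exists c, side_of e c /\ C0 occ c /\ in_interior C (Sq c)) /\
     (exists c, side_of e c /\ ~ occ c /\ in_exterior C (Sq c)).
Proof. intros HC He. apply in_boundary_cycles in HC. destruct HC as [r [Hr ->]]. destruct Hr as [HD _].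
  pose proof He as He'. apply orbit_cycle_edge_dart in He; auto. destruct He as [t ->].
  assert (Dt := adv_bdart t r HD). split; [|split].
  - exists (left_sq (adv t r)), (right_sq (adv t r)). repeat split; auto using side_left_sq, side_right_sq.
    apply C0_occ, Dt. apply right_sq_vacant; auto.
  - exists (left_sq (adv t r)). repeat split; auto using side_left_sq. apply Dt.
    apply orbit_interior_iff; auto.
    split; simpl; auto. apply orbit_parity_sides; auto.
  - exists (right_sq (adv t r)). repeat split; auto using side_right_sq. apply right_sq_vacant; auto.
    apply outer_vacant_exterior. apply orbit_cycle_walk; auto. apply Dt. Qed.

Lemma reps_edge_disjoint r1 r2 : is_rep r1 -> is_rep r2 -> r1 <> r2 ->
  forall e, cycle_edge (orbit_cycle r1) e -> ~ cycle_edge (orbit_cycle r2) e.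
Proof. intros H1 H2 Hne e E1 E2. apply orbit_cycle_edge_dart in E1; [|apply H1].
  apply orbit_cycle_edge_dart in E2; [|apply H2].
  destruct E1 as [t1 ->], E2 as [t2 E].
  apply bdart_edge_inj in E; try apply adv_bdart; try apply H1; try apply H2.
  apply Hne. eapply reps_disjoint; eauto. Qed.

Lemma cycles_interiors_disjoint r1 r2 x : is_rep r1 -> is_rep r2 -> r1 <> r2 ->
  ~ (in_interior (orbit_cycle r1) x /\ in_interior (orbit_cycle r2) x).
Proof. intros H1 H2 Hne [I1 I2]. apply orbit_interior_iff in I1; [|apply H1].
  apply orbit_interior_iff in I2; [|apply H2].
  apply (orbit_parities_disjoint r1 r2 (proj1 H1) (proj1 H2) (reps_edge_disjoint r1 r2 H1 H2 Hne)
  (cell_sq x)); tauto. Qed.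

Lemma cycles_share_one_vertex r1 r2 u v : is_rep r1 -> is_rep r2 -> r1 <> r2 ->
  In u (orbit_cycle r1) -> In u (orbit_cycle r2) -> In v (orbit_cycle r1) -> In v (orbit_cycle r2) -> u = v.
Proof. intros [D1 H1] [D2 H2] Hne U1 U2 V1 V2.
  apply in_orbit_cycle in U1, U2, V1, V2; auto.
  destruct U1 as [a Ea], U2 as [a' Ea'], V1 as [b Eb], V2 as [b' Eb'].
  set (x := adv a r1). set (y := adv a' r2).
  assert (Hdis : forall m n, adv m x <> adv n y).
  { intros m n E. unfold x, y in E. rewrite !adv_adv in E. apply Hne.
    apply (reps_disjoint r1 r2 (m+a) (n+a')); [split; auto | split; auto | exact E]. }
  pose proof (orbits_share_one_vertex x y (adv_bdart a r1 D1) (adv_bdart a' r2 D2) Hdis ltac:(unfold x,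
  y; congruence)
     (b + a * (period r1 - 1)) (b' + a' * (period r2 - 1))) as S.
  unfold x, y in S. rewrite !adv_orbit_shift in S by auto. rewrite Ea, Eb. symmetry. apply S. congruence. Qed.

Definition encloses r c := is_rep r /\ cyc_parity (orbit_cycle r) c = true.
Lemma encloser_ex c : C0 occ c -> exists r, encloses r c.
Proof. intro Hc. destruct (enclosing_orbit c) as [d [HD Hp]].
  { intro Q; apply outer_vacant_not_C0 in Q; contradiction. }
  destruct (orbit_rep d HD) as [r [Hr [n ->]]]. exists r; split; auto.
  rewrite <- (cyc_parity_adv r n); auto. apply Hr. Qed.

Lemma encloser_uniq r1 r2 c : encloses r1 c -> encloses r2 c -> r1 = r2.
Proof. intros [H1 P1] [H2 P2]. apply NNPP; intro Hne.
  apply (orbit_parities_disjoint r1 r2 (proj1 H1) (proj1 H2) (reps_edge_disjoint r1 r2 H1 H2 Hne) c);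
  auto. Qed.

Lemma cyc_parity_through r c c' e : is_rep r -> side_of e c -> side_of e c' -> ~ outer_vacant c ->
  ~ outer_vacant c' ->
  cyc_parity (orbit_cycle r) c = cyc_parity (orbit_cycle r) c'.
Proof. intros Hr H1 H2 O1 O2. destruct (classic (c = c')) as [->|Hne]; auto.
  assert (Hnc : ~ cycle_edge (orbit_cycle r) e).
  { intro Q. apply orbit_cycle_edge_outer in Q; [|apply Hr]. destruct Q as [z [Q1 Q2]].
    apply side_of_iff in Q1, H1, H2. destruct Q1, H1, H2; subst; try congruence. }
  pose proof (cyc_parity_off_edge (orbit_cycle r) e (orbit_cycle_walk r (proj1 Hr)) Hnc).
  apply side_of_iff in H1, H2. destruct H1, H2; subst; congruence. Qed.

Definition touches r1 r2 := is_rep r1 /\ is_rep r2 /\ exists v, In v (orbit_cycle r1) /\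
  In v (orbit_cycle r2).
Lemma corner_endpoint e s t w : side_of e s -> side_of e t -> s <> t -> corner w s -> corner w t ->
  w = fst (ends e) \/ w = snd (ends e).
Proof. destruct e as [[x y] [|]]; destruct s as [a b], t as [c d], w as [p q]; unfold corner; simpl;
  intros H1 H2 Hne H3 H4;
  destruct H1 as [H1|H1]; destruct H2 as [H2|H2]; inj_pairs; intros; subst;
  try (exfalso; apply Hne; f_equal; lia);
  destruct H3 as [H3|[H3|[H3|H3]]]; destruct H4 as [H4|[H4|[H4|H4]]]; inj_pairs; intros; subst;
  try (exfalso; lia); first [left; f_equal; lia | right; f_equal; lia]. Qed.

Lemma dart_ends_in_orbit r d : is_rep r -> (exists n, d = adv n r) ->
  forall w, (w = fst (ends (dart_edge d)) \/ w = snd (ends (dart_edge d))) -> In w (orbit_cycle r).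
Proof. intros Hr [n ->] w Hw. apply in_orbit_cycle; [apply Hr|].
  pose proof (dart_edge_joins (adv n r)) as J. unfold joins in J.
  assert (w = src (adv n r) \/ w = src (adv (S n) r)) as [->| ->] by (rewrite src_adv_S;
  destruct J as [[J1 J2]|[J1 J2]]; destruct Hw; subst; auto).
  eauto. eauto. Qed.

Lemma C0_not_outer_vacant c : C0 occ c -> ~ outer_vacant c.
Proof. intros H1 H2; apply outer_vacant_not_C0 in H2; contradiction. Qed.

Lemma encloses_plus_adj r a c :
  encloses r a -> plus_adj a c -> ~ outer_vacant a -> ~ outer_vacant c -> encloses r c.
Proof.
  intros [Hr Ha] P Oa Oc. destruct (plus_adj_edge a c P) as [e He]. split; auto.
  rewrite <- Ha. symmetry. apply (cyc_parity_through r a c e); auto;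
    destruct He as [[-> ->]|[-> ->]]; auto using side_A, side_B.
Qed.

Lemma dart_between a o : plus_adj a o -> exists d, left_sq d = a /\ right_sq d = o.
Proof.
  intro P. destruct (plus_adj_edge a o P) as [e He].
  assert (Hne : a <> o) by (intros ->; destruct o; unfold plus_adj in P; simpl in P; lia).
  assert (Sa : side_of e a /\ side_of e o) by (destruct He as [[-> ->]|[-> ->]]; auto using side_A, side_B).
  destruct (edge_to_dart e a o (proj1 Sa) (proj2 Sa) Hne) as [d [_ [Hl Hr]]]; eauto.
Qed.

Lemma corner_in_encloser r d w :
  bdart d -> encloses r (left_sq d) -> corner w (left_sq d) -> corner w (right_sq d) ->
  In w (orbit_cycle r).
Proof.
  intros HD Hr Cl Cr. destruct (orbit_rep d HD) as [r' [Hr' [n En]]].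
  assert (r' = r).
  { apply (encloser_uniq _ _ (left_sq d)); auto. split; auto. rewrite En. apply orbit_parity_sides, Hr'. }
  subst r'. apply (dart_ends_in_orbit r d); eauto.
  apply (corner_endpoint (dart_edge d) (left_sq d) (right_sq d)); auto using side_left_sq, side_right_sq.
  apply left_right_star_adj.
Qed.

Lemma diagonal_neighbours a b : star_adj a b -> ~ plus_adj a b ->
  plus_adj a (fst b, snd a) /\ plus_adj b (fst b, snd a) /\
  exists w, corner w a /\ corner w b /\ corner w (fst b, snd a).
Proof.
  destruct a as [a1 a2], b as [b1 b2]. unfold star_adj, plus_adj; simpl. intros [Hab [Hx Hy]] P.
  assert (D : Z.abs (a1 - b1) = 1 /\ Z.abs (a2 - b2) = 1).
  { destruct (Z.eq_dec a1 b1), (Z.eq_dec a2 b2); subst; try (exfalso; apply Hab; reflexivity); lia. }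
  split; [lia|]. split; [lia|]. exists (Z.max a1 b1, Z.max a2 b2). unfold corner; simpl.
  repeat split; destruct (Z.abs_spec (a1 - b1)) as [[? ?]|[? ?]];
    destruct (Z.abs_spec (a2 - b2)) as [[? ?]|[? ?]];
    first [ left; f_equal; lia | right; left; f_equal; lia | right; right; left; f_equal; lia
          | right; right; right; f_equal; lia ].
Qed.

(* The cycles enclosing two star-adjacent squares of C(0) coincide or touch:
   across a common side they coincide, and across a diagonal they coincide
   unless the square beside both is outer vacant, in which case both cycles
   pass through the common corner. *)
Lemma star_adj_touch a b ra rb : C0 occ a -> C0 occ b -> star_adj a b ->
  encloses ra a -> encloses rb b -> ra = rb \/ touches ra rb.
Proof.
  intros Ha Hb Hab Oa Ob. destruct (classic (ra = rb)) as [E|Hne]; [left; auto|right].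
  split; [apply Oa|]. split; [apply Ob|].
  destruct (classic (plus_adj a b)) as [P|P].
  { exfalso. apply Hne, (encloser_uniq _ _ b); auto.
    apply (encloses_plus_adj ra a); auto using C0_not_outer_vacant. }
  destruct (diagonal_neighbours a b Hab P) as [PaX [PbX [w [Wa [Wb WX]]]]].
  set (X := (fst b, snd a)) in *.
  destruct (classic (outer_vacant X)) as [OX|OX].
  - destruct (dart_between a X PaX) as [da [La Ra]], (dart_between b X PbX) as [db [Lb Rb]].
    assert (Da : bdart da) by (unfold bdart; rewrite La, Ra; auto).
    assert (Db : bdart db) by (unfold bdart; rewrite Lb, Rb; auto).
    exists w. split.
    + apply (corner_in_encloser ra da); rewrite ?La, ?Ra; auto.
    + apply (corner_in_encloser rb db); rewrite ?Lb, ?Rb; auto.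
  - exfalso. apply Hne, (encloser_uniq _ _ b); auto.
    apply (encloses_plus_adj ra X); auto using C0_not_outer_vacant, plus_adj_sym.
    apply (encloses_plus_adj ra a); auto using C0_not_outer_vacant.
Qed.

Lemma touch_chain r0 : forall l c0, chain star_adj (c0 :: l) -> (forall c, In c (c0 :: l) -> C0 occ c) ->
  (forall r, encloses r c0 -> clos_refl_trans _ touches r0 r) ->
  forall c, In c (c0 :: l) -> forall r, encloses r c -> clos_refl_trans _ touches r0 r.
Proof. induction l as [|c1 l IH]; intros c0 Hch HC Hc0 c Hc r Hr.
  - destruct Hc as [<-|[]]; auto.
  - destruct Hc as [<-|Hc]; auto. apply (IH c1) with (c := c); auto.
    + apply (chain_cons_inv _ c0); auto.
    + intros c' Hc'; apply HC; right; auto.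
    + intros r1 Hr1. destruct (encloser_ex c0 (HC c0 (or_introl eq_refl))) as [r' Hr'].
      assert (Hs : r' = r1 \/ touches r' r1) by (apply (star_adj_touch c0 c1); [apply HC; left; auto |
      apply HC; right; left; auto | apply (proj1 Hch) | exact Hr' | exact Hr1]).
      destruct Hs as [E|E]. subst; auto. apply rt_trans with r'; auto. apply rt_step; auto.
Qed.

Lemma all_touch_connected r0 : encloses r0 origin -> forall r, is_rep r -> clos_refl_trans _ touches r0 r.
Proof. intros H0 r Hr. assert (Hl : C0 occ (left_sq r)) by apply Hr.
  destruct Hl as [Y [H1 [H2 [H3 H4]]]].
  apply (touch_chain r0 Y origin H3 (fun c Hc => C0_path_elem Y c H1 H2 H3 Hc)) with (c := left_sq r).
  - intros r' Hr'. rewrite (encloser_uniq r0 r' origin); auto. apply rt_refl.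
  - rewrite <- H4. apply last_in.
  - split; auto. apply (orbit_parity_sides r 0), Hr. Qed.

Definition union_adj (u v : pt) := exists e, union_edge boundary_cycles e /\ joins e u v.
Lemma union_adj_sym u v : union_adj u v -> union_adj v u.
Proof. intros [e [H1 H2]]; exists e; split; auto. unfold joins in *; tauto. Qed.

Lemma orbit_connected r : is_rep r -> forall t, clos_refl_trans _ union_adj (src r) (src (adv t r)).
Proof. intros Hr t; induction t; [apply rt_refl|]. apply rt_trans with (src (adv t r)); auto.
  apply rt_step. exists (dart_edge (adv t r)). split. apply union_iff. exists (adv t r); split; auto.
  apply adv_bdart, Hr.
  rewrite src_adv_S; apply dart_edge_joins. Qed.

Lemma orbit_cycle_connected r u : is_rep r -> In u (orbit_cycle r) -> clos_refl_trans _ union_adj (src r) u.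
Proof. intros Hr Hu. apply in_orbit_cycle in Hu; [|apply Hr]. destruct Hu as [t ->].
  apply orbit_connected; auto. Qed.

Lemma touch_connected r1 r2 : clos_refl_trans _ touches r1 r2 ->
  clos_refl_trans _ union_adj (src r1) (src r2).
Proof. intro H. induction H.
  - destruct H as [Hx [Hy [v [V1 V2]]]]. apply rt_trans with v. apply orbit_cycle_connected; auto.
    apply crt_sym. apply union_adj_sym. apply orbit_cycle_connected; auto.
  - apply rt_refl.
  - eapply rt_trans; eauto. Qed.

Lemma union_vertex_iff u : union_vertex boundary_cycles u <-> exists r, is_rep r /\ In u (orbit_cycle r).
Proof. unfold union_vertex. split.
  - intros [C [HC Hu]]. apply in_boundary_cycles in HC. destruct HC as [r [Hr ->]]. eauto.
  - intros [r [Hr Hu]]. exists (orbit_cycle r); split; auto. apply in_boundary_cycles; eauto. Qed.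

Lemma cycles_connected : union_connected boundary_cycles.
Proof. intros u v Hu Hv. apply union_vertex_iff in Hu, Hv. destruct Hu as [r1 [H1 U1]], Hv as [r2 [H2 V2]].
  destruct (encloser_ex origin C0_origin) as [r0 O0].
  apply crt_path. apply rt_trans with (src r1). apply crt_sym. apply union_adj_sym.
  apply orbit_cycle_connected; auto.
  apply rt_trans with (src r0). apply crt_sym. apply union_adj_sym. apply touch_connected.
  apply all_touch_connected; auto.
  apply rt_trans with (src r2). apply touch_connected. apply all_touch_connected; auto.
  apply orbit_cycle_connected; auto. Qed.

(** * The circuit *)

Definition dart_follows (x y : dart) := tgt x = src y.
Definition closed_trail (l : list dart) :=
  match l with [] => True | x :: _ => chain dart_follows (l ++ [x]) end.
Lemma chain_snoc_change l y y' : chain dart_follows (l ++ [y]) -> src y = src y' ->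
  chain dart_follows (l ++ [y']).
Proof. induction l as [|a l IH]; intros H E; [simpl; auto|]. destruct l as [|b l].
  - simpl in *. destruct H; split; auto. unfold dart_follows in *; congruence.
  - change (dart_follows a b /\ chain dart_follows ((b :: l) ++ [y'])).
    change (dart_follows a b /\ chain dart_follows ((b :: l) ++ [y])) in H.
    destruct H; split; auto. Qed.

Lemma closed_trail_rot A B : A <> [] -> B <> [] -> closed_trail (A ++ B) -> closed_trail (B ++ A).
Proof. destruct A as [|a A], B as [|b B]; try congruence. intros _ _. simpl.
  intro H. rewrite <- app_assoc in H. simpl in H.
  change (chain dart_follows ((a :: A) ++ b :: B ++ [a])) in H.
  apply chain_app in H. destruct H as [H1 H2].
  rewrite <- app_assoc. simpl. change (chain dart_follows ((b :: B) ++ a :: A ++ [b])). apply chain_app.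
  split; auto. Qed.

Lemma closed_trail_glue o O t T : closed_trail (o :: O) -> closed_trail (t :: T) -> src o = src t ->
  closed_trail ((o :: O) ++ t :: T).
Proof. simpl. intros H1 H2 E. rewrite <- app_assoc. simpl.
  change (chain dart_follows ((o :: O) ++ t :: T ++ [o])).
  apply chain_app. split.
  - apply (chain_snoc_change (o :: O) o t); auto.
  - change (chain dart_follows ((t :: T) ++ [o])). apply (chain_snoc_change (t :: T) t o); auto. Qed.

Lemma chain_map_seq (f : nat -> dart) a n : (forall i, dart_follows (f i) (f (S i))) ->
  chain dart_follows (map f (seq a n)).
Proof. intro H. revert a; induction n; intros a; simpl; auto. destruct n; simpl; auto. split; auto.
  specialize (IHn (S a)); simpl in IHn; auto. Qed.

Definition orbit (d : dart) : list dart := map (fun i => adv i d) (seq 0 (period d)).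
Lemma orbit_closed d : bdart d -> closed_trail (orbit d).
Proof. intro HD. unfold orbit. pose proof (period_pos d). destruct (period d) as [|p] eqn:E; [lia|].
  change (chain dart_follows (map (fun i => adv i d) (seq 0 (S p)) ++ [adv 0 d])).
  replace (adv 0 d) with (adv (0 + S p) d) by (simpl plus; rewrite <- E, adv_period; auto).
  change [adv (0 + S p) d] with (map (fun i => adv i d) [(0 + S p)%nat]).
  rewrite <- map_app, <- seq_S. apply chain_map_seq.
  intro i; unfold dart_follows; rewrite <- src_adv_S; auto. Qed.

Lemma orbit_nodup d : bdart d -> NoDup (orbit d).
Proof. intro HD. apply (NoDup_nth (orbit d) d). unfold orbit; rewrite length_map, length_seq.
  intros i j Hi Hj E.
  rewrite !nth_map_seq in E by auto. apply adv_inj in E; auto. Qed.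

Lemma in_orbit d x : bdart d -> (In x (orbit d) <-> exists n, x = adv n d).
Proof. intro HD. unfold orbit. rewrite in_map_iff. split.
  - intros [n [<- _]]; eauto.
  - intros [n ->]. exists (n mod period d)%nat. split. symmetry; apply adv_mod; auto.
    apply in_seq. split; [lia|]. simpl. apply Nat.mod_upper_bound. pose proof (period_pos d); lia. Qed.

Lemma orbit_cons d : exists O', orbit d = d :: O'.
Proof. unfold orbit. pose proof (period_pos d). destruct (period d); [lia|]. simpl. eauto. Qed.

Record trail_inv (r0 : dart) (T : list dart) : Prop := {
  trail_nonempty : T <> [];
  trail_closed : closed_trail T;
  trail_nodup : NoDup T;
  trail_bdart : forall x, In x T -> bdart x;
  trail_next : forall x, In x T -> In (next_dart x) T;
  trail_root : In r0 T }.

Lemma trail_inv_adv r0 T x n : trail_inv r0 T -> In x T -> In (adv n x) T.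
Proof. intros HI Hx. induction n; auto. rewrite adv_S. apply (trail_next _ _ HI); auto. Qed.

Lemma trail_inv_orbit r0 : bdart r0 -> trail_inv r0 (orbit r0).
Proof.
  intro HD. constructor.
  - destruct (orbit_cons r0) as [O' ->]; discriminate.
  - apply orbit_closed; auto.
  - apply orbit_nodup; auto.
  - intros x Hx. apply in_orbit in Hx; auto. destruct Hx as [n ->]. apply adv_bdart; auto.
  - intros x Hx. apply in_orbit in Hx; auto. destruct Hx as [n ->]. apply in_orbit; auto. exists (S n); auto.
  - apply in_orbit; auto. exists O; auto.
Qed.

Lemma closed_trail_rotate A t B : closed_trail (A ++ t :: B) -> closed_trail (t :: B ++ A).
Proof.
  destruct A as [|a0 A]; [rewrite app_nil_r; auto|].
  change (t :: B ++ a0 :: A) with ((t :: B) ++ a0 :: A). apply closed_trail_rot; discriminate.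
Qed.

Lemma splice_trail r0 T t dl : trail_inv r0 T -> In t T -> bdart dl -> src t = src dl ->
  (forall x, In x (orbit dl) -> ~ In x T) ->
  exists T', trail_inv r0 T' /\ forall x, In x T' <-> In x (orbit dl) \/ In x T.
Proof.
  intros HI HtT Ddl Et Hdisj. destruct (orbit_cons dl) as [O' EO].
  apply in_split in HtT. destruct HtT as [A [B ET]].
  assert (Hperm : Permutation T (t :: B ++ A)).
  { rewrite ET. change (t :: B ++ A) with ((t :: B) ++ A). apply Permutation_app_comm. }
  assert (HinT : forall x, In x (t :: B ++ A) <-> In x T).
  { intro x; split; apply Permutation_in; auto. symmetry; auto. }
  exists (orbit dl ++ t :: B ++ A). split.
  - constructor.
    + rewrite EO; discriminate.
    + rewrite EO. apply closed_trail_glue; [rewrite <- EO; apply orbit_closed; auto| |auto].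
      apply closed_trail_rotate. rewrite <- ET. apply (trail_closed _ _ HI).
    + apply NoDup_app; [apply orbit_nodup; auto | apply (Permutation_NoDup Hperm), (trail_nodup _ _ HI) |].
      intros x Hx1 Hx2. apply (Hdisj x Hx1), HinT; auto.
    + intros x Hx. apply in_app_or in Hx. destruct Hx as [Hx|Hx].
      * apply in_orbit in Hx; auto. destruct Hx as [k ->]. apply adv_bdart; auto.
      * apply (trail_bdart _ _ HI), HinT; auto.
    + intros x Hx. apply in_or_app. apply in_app_or in Hx. destruct Hx as [Hx|Hx].
      * left. apply in_orbit in Hx; auto. destruct Hx as [k ->]. apply in_orbit; auto. exists (S k); auto.
      * right. apply HinT, (trail_next _ _ HI), HinT; auto.
    + apply in_or_app; right. apply HinT, (trail_root _ _ HI).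
  - intro x. rewrite in_app_iff, HinT. reflexivity.
Qed.

Definition missing_reps (T : list dart) : nat := length (filter (fun r => negb (dec (In r T))) reps).

(* A representative missing from the trail touches, through a chain of
   touching cycles, one whose orbit is already in it; splice in the first
   missing orbit of that chain. *)
Lemma splice_step r0 T : encloses r0 origin -> trail_inv r0 T -> (exists r, is_rep r /\ ~ In r T) ->
  exists T', trail_inv r0 T' /\ (missing_reps T' < missing_reps T)%nat.
Proof.
  intros Ho HI [r [Hr HrT]].
  destruct (crt_cross touches (fun x => In x T) r0 r (all_touch_connected r0 Ho r Hr) (trail_root _ _ HI) HrT)
    as [a [b [[Ha [Hb [v [Va Vb]]]] [HaT HbT]]]].
  apply in_orbit_cycle in Va; [|apply Ha]. apply in_orbit_cycle in Vb; [|apply Hb].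
  destruct Va as [n1 E1], Vb as [n2 E2].
  assert (Hdisj : forall x, In x (orbit (adv n2 b)) -> ~ In x T).
  { intros x Hx HxT. apply in_orbit in Hx; [|apply adv_bdart, Hb]. destruct Hx as [k ->].
    rewrite adv_adv in HxT. apply HbT. rewrite <- (adv_orbit_back b (k + n2)) by apply Hb.
    apply (trail_inv_adv r0); auto. }
  destruct (splice_trail r0 T (adv n1 a) (adv n2 b) HI) as [T' [HI' HT']];
    [apply (trail_inv_adv r0); auto | apply adv_bdart, Hb | congruence | exact Hdisj |].
  exists T'. split; auto. unfold missing_reps. apply (filter_lt _ _ reps b).
  - intros x Hx. apply negb_true_iff, dec_false. apply negb_true_iff, dec_false in Hx.
    intro Q; apply Hx, HT'; auto.
  - apply in_reps; auto.
  - apply negb_true_iff, dec_false; auto.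
  - apply negb_false_iff, dec_true, HT'. left. apply in_orbit; [apply adv_bdart, Hb|].
    exists (n2 * (period b - 1))%nat. rewrite adv_orbit_back; auto. apply Hb.
Qed.

Lemma full_trail r0 : encloses r0 origin -> exists T, trail_inv r0 T /\ forall r, is_rep r -> In r T.
Proof. intro Ho.
  assert (A : forall n T, missing_reps T = n -> trail_inv r0 T -> exists T',
  trail_inv r0 T' /\ forall r, is_rep r -> In r T').
  { intro n. induction n as [n IH] using (well_founded_induction lt_wf). intros T Hn HI.
    destruct (classic (exists r, is_rep r /\ ~ In r T)) as [E|E].
    - destruct (splice_step r0 T Ho HI E) as [T' [H1 H2]].
      apply (IH (missing_reps T')) with (T := T'); auto. lia.
    - exists T; split; auto. intros r Hr. apply NNPP; intro Q; apply E; eauto. }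
  apply (A _ (orbit r0) eq_refl). apply trail_inv_orbit. apply Ho. Qed.

Lemma closed_trail_nth T dd : closed_trail T -> forall i, (i < length T)%nat ->
  tgt (nth i T dd) = src (nth ((S i) mod length T) T dd).
Proof. intros HC i Hi. destruct T as [|x T0]; [simpl in Hi; lia|]. unfold closed_trail in HC.
  pose proof (chain_nth dart_follows _ dd HC i) as Q. rewrite length_app in Q. simpl length in Q.
  specialize (Q ltac:(simpl in *; lia)). unfold dart_follows in Q.
  rewrite app_nth1 in Q by auto. rewrite Q. destruct (Nat.eq_dec (S i) (length (x :: T0))) as [E|E].
  - rewrite app_nth2 by lia. rewrite E, Nat.sub_diag, Nat.Div0.mod_same. reflexivity.
  - rewrite app_nth1 by lia. rewrite Nat.mod_small by lia. reflexivity. Qed.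

Lemma trail_circuit r0 T : trail_inv r0 T -> (forall r, is_rep r -> In r T) ->
  is_circuit occ (map src T) (map dart_edge T) /\ forall e,
  union_edge boundary_cycles e -> In e (map dart_edge T).
Proof.
  intros HI Hall. split.
  - split; [destruct T; [exfalso; apply (trail_nonempty _ _ HI); reflexivity | discriminate]|].
    split; [rewrite !length_map; auto|]. split.
    + apply NoDup_map_on; [|apply (trail_nodup _ _ HI)].
      intros x y Hx Hy E. apply bdart_edge_inj; auto; apply (trail_bdart _ _ HI); auto.
    + intros i Hi. rewrite length_map in Hi. set (dd := (origin, DE)).
      assert (Hm : forall {B} (f : dart -> B) j x, (j < length T)%nat -> nth j (map f T) x = f (nth j T dd)).
      { intros B f j x Hj. rewrite nth_indep with (d' := f dd) by (rewrite length_map; auto). apply map_nth. }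
      rewrite !Hm by auto. split.
      * apply dart_edge_GC, (trail_bdart _ _ HI), nth_In; auto.
      * unfold nxt. rewrite length_map, Hm by (apply Nat.mod_upper_bound; lia).
        rewrite <- closed_trail_nth by (auto; apply (trail_closed _ _ HI)). apply dart_edge_joins.
  - intros e He. apply union_iff in He. destruct He as [d [HD <-]].
    destruct (orbit_rep d HD) as [r [Hr [n ->]]]. apply in_map, (trail_inv_adv r0 T r n HI), Hall, Hr.
Qed.

(** * Uniqueness *)

Lemma on_boundary_bdart_edge w b : bdart_edge (dart_edge (w,b)) -> on_boundary (config_at w) b = true.
Proof. intros [d [HD E]]. apply on_boundary_iff. symmetry in E. destruct (dart_edge_eq _ _ E) as [Q|Q].
  - left. rewrite <- Q in HD. apply HD.
  - right. assert (Q' : d = dart_rev (w,b)) by (rewrite Q, dart_rev_involutive; auto). rewrite Q' in HD.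
    destruct HD as [H1 H2]. rewrite left_sq_rev in H1; rewrite right_sq_rev in H2; auto. Qed.

Lemma cycle_turn_forced g L d0 d1 :
  gc_walk g L -> closed_walk g L -> (2 <= L)%nat -> (forall t, (0 < t < L)%nat -> g t <> g O) ->
  src d1 = g O -> tgt d1 = g 1%nat -> src d0 = g (L-1)%nat -> tgt d0 = g L ->
  bdart_edge (dart_edge d0) -> bdart_edge (dart_edge d1) -> dart_edge d0 <> dart_edge d1 ->
  (bdart d0 -> d1 = next_dart d0) /\ (bdart (dart_rev d1) -> dart_rev d0 = next_dart (dart_rev d1)).
Proof.
  intros Hg Hc HL Hn S1 T1 S0 T0 B0 B1 Hne.
  destruct (simple_return_constraints g L d0 d1 Hg Hc HL Hn S1 T1 S0 T0) as [K1 K2].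
  set (w := g O) in *. set (a := snd d0) in *. set (b := snd d1) in *. set (l := config_at w) in *.
  assert (Tw : tgt d0 = w) by (rewrite T0; exact Hc).
  assert (E0 : d0 = dart_rev (w, opp a)) by (apply dart_rev_at_tgt; exact Tw).
  assert (E1 : d1 = (w, b)) by (apply dart_src; exact S1).
  assert (V : valid_config l = true) by apply config_at_valid.
  split; intro HD.
  - assert (Ia : enters_boundary l a = true) by (unfold l; rewrite <- Tw; apply enters_boundary_iff; auto).
    assert (Bb : on_boundary l b = true) by (apply on_boundary_bdart_edge; rewrite <- E1; auto).
    assert (Nab : dir_eqb b (opp a) = false).
    { destruct (dir_eqb_spec b (opp a)) as [E|E]; auto.
      exfalso. apply Hne. rewrite E0, E1, dart_edge_rev, E; auto. }
    pose proof (local_succ_forced l a b (ray_parity g L (sNE w))) as Q.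
    rewrite V, Ia, Bb, Nab, K1, K2 in Q. specialize (Q eq_refl).
    rewrite E1; unfold next_dart; rewrite Tw, Q. auto.
  - rewrite (parities_consistent_ext _ _ _ (flips_through_rev a b)) in K1.
    rewrite (outer_even_around_ext _ _ _ _ (flips_through_rev a b)) in K2.
    assert (Ib : enters_boundary l (opp b) = true).
    { unfold l. rewrite <- S1, <- (tgt_rev d1). apply enters_boundary_iff; auto. }
    assert (Ba : on_boundary l (opp a) = true).
    { apply on_boundary_bdart_edge. rewrite <- (dart_edge_rev (w, opp a)), <- E0; auto. }
    assert (Nab : dir_eqb (opp a) (opp (opp b)) = false).
    { rewrite opp_opp. destruct (dir_eqb_spec (opp a) b) as [E|E]; auto.
      exfalso. apply Hne. rewrite E0, E1, dart_edge_rev, <- E; auto. }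
    pose proof (local_succ_forced l (opp b) (opp a) (ray_parity g L (sNE w))) as Q.
    rewrite V, Ib, Ba, Nab, K1, K2 in Q. specialize (Q eq_refl).
    unfold next_dart; rewrite tgt_rev, S1. change (snd (dart_rev d1)) with (opp b). fold w l.
    rewrite <- Q, E0, dart_rev_involutive. auto.
Qed.

Definition dir_of (u v : pt) : dir :=
  if Z.eqb (fst v) (fst u + 1) then DE else if Z.eqb (snd v) (snd u + 1) then DN
  else if Z.eqb (fst v) (fst u - 1) then DW else DS.
Lemma dir_of_ok u v : adj u v -> tgt (u, dir_of u v) = v.
Proof. intro H. destruct (adj_dart u v H) as [[[x y] o] [<- <-]]. unfold dir_of, src, tgt; destruct o; simpl;
  zcase; try (f_equal; lia); exfalso; lia. Qed.

Lemma cyc_at_mod C t : cyc_at C t = cyc_at C (t mod length C).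
Proof. unfold cyc_at. rewrite Nat.Div0.mod_mod; auto. Qed.

Lemma cyc_at_S_mod C t : cyc_at C (S t) = cyc_at C (S (t mod length C)).
Proof. unfold cyc_at. f_equal. replace (S t) with (t + 1)%nat by lia.
  replace (S (t mod length C)) with (t mod length C + 1)%nat by lia.
  rewrite Nat.Div0.add_mod_idemp_l; auto. Qed.

Lemma cyc_at_walk C : cycle_walk C ->
  forall t, exists e, GC_edge occ e /\ joins e (cyc_at C t) (cyc_at C (S t)).
Proof. intros [H0 H] t. rewrite cyc_at_mod, cyc_at_S_mod. apply H. apply Nat.mod_upper_bound; lia. Qed.

Lemma cyc_at_inj C a b : NoDup C -> (0 < length C)%nat -> cyc_at C a = cyc_at C b ->
  (a mod length C = b mod length C)%nat.
Proof. intros Hn H0 E. unfold cyc_at in E.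
  apply (NoDup_nth C origin) in E; auto; apply Nat.mod_upper_bound; lia. Qed.

Lemma mod_shift_neq r t m : (r < m)%nat -> (0 < t < m)%nat -> ((r + t) mod m <> r)%nat.
Proof. intros H1 H2. destruct (lt_dec (r + t) m).
  - rewrite Nat.mod_small; lia.
  - replace (r + t)%nat with ((r + t - m) + 1 * m)%nat by lia. rewrite Nat.Div0.mod_add.
    rewrite Nat.mod_small; lia. Qed.

Lemma mod_shift_neq' a t m : (0 < t < m)%nat -> ((a + t) mod m <> a mod m)%nat.
Proof. intros H. rewrite <- Nat.Div0.add_mod_idemp_l. apply mod_shift_neq; auto.
  apply Nat.mod_upper_bound; lia. Qed.

Definition cycle_dart (C : list pt) (k : nat) : dart := (cyc_at C k, dir_of (cyc_at C k) (cyc_at C (S k))).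
Lemma cycle_dart_tgt C k : cycle_walk C -> tgt (cycle_dart C k) = cyc_at C (S k).
Proof. intro HC. destruct (cyc_at_walk C HC k) as [e [_ He]]. apply dir_of_ok. exists e; auto. Qed.

Lemma cycle_dart_period C k : (0 < length C)%nat -> cycle_dart C (k + length C) = cycle_dart C k.
Proof. intro H. unfold cycle_dart. rewrite cyc_at_period by auto.
  replace (S (k + length C)) with (S k + length C)%nat by lia.
  rewrite cyc_at_period; auto. Qed.

Lemma cycle_dart_edge C k : cycle_walk C -> cycle_edge C (dart_edge (cycle_dart C k)).
Proof. intro HC. apply cycle_edge_iff. exists (k mod length C)%nat. split.
  apply Nat.mod_upper_bound; destruct HC; lia.
  rewrite <- cyc_at_mod, <- cyc_at_S_mod. rewrite <- (cycle_dart_tgt C k HC).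
  change (cyc_at C k) with (src (cycle_dart C k)).
  apply joinsb_dart_edge; reflexivity. Qed.

Lemma cycle_dart_mod C k : cycle_dart C k = cycle_dart C (k mod length C).
Proof. unfold cycle_dart. rewrite <- cyc_at_mod, <- cyc_at_S_mod; auto. Qed.

Lemma cycle_edge_dart C e : cycle_walk C -> cycle_edge C e -> exists k, e = dart_edge (cycle_dart C k).
Proof. intros HC He. apply cycle_edge_iff in He. destruct He as [k [_ Hk]]. exists k.
  rewrite <- (cycle_dart_tgt C k HC) in Hk. change (cyc_at C k) with (src (cycle_dart C k)) in Hk.
  apply joinsb_dart_edge in Hk; auto. Qed.

Lemma cycle_dart_next C k : is_cycle occ C -> (forall e, cycle_edge C e -> bdart_edge e) ->
  (bdart (cycle_dart C k) -> cycle_dart C (S k) = next_dart (cycle_dart C k)) /\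
  (bdart (dart_rev (cycle_dart C (S k))) ->
   dart_rev (cycle_dart C k) = next_dart (dart_rev (cycle_dart C (S k)))).
Proof. intros HCy Hb. pose proof (is_cycle_walk C HCy) as HC. destruct HCy as [Hm [Hnd _]].
  set (m := length C) in *. set (g := fun t => cyc_at C (S k + t)).
  apply (cycle_turn_forced g m).
  - intros t Ht. unfold g. replace (S k + S t)%nat with (S (S k + t)) by lia. apply cyc_at_walk; auto.
  - unfold closed_walk, g. rewrite Nat.add_0_r. apply cyc_at_period; lia.
  - lia.
  - intros t Ht E. unfold g in E. rewrite Nat.add_0_r in E. apply cyc_at_inj in E; auto; try lia.
    apply (mod_shift_neq' (S k) t m); auto.
  - unfold g; simpl; rewrite Nat.add_0_r; auto.
  - unfold g. rewrite cycle_dart_tgt by auto. f_equal; lia.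
  - unfold g, cycle_dart; simpl. replace (S (k + (m - 1))) with (k + m)%nat by lia.
    rewrite cyc_at_period; auto; lia.
  - unfold g. rewrite cycle_dart_tgt by auto. rewrite cyc_at_period; auto; lia.
  - apply Hb, cycle_dart_edge; auto.
  - apply Hb, cycle_dart_edge; auto.
  - intro E. destruct (dart_edge_eq _ _ E) as [Q|Q].
    + apply (f_equal src) in Q. unfold cycle_dart, src in Q; simpl in Q. apply cyc_at_inj in Q; auto; try lia.
      replace (S k) with (k + 1)%nat in Q by lia. symmetry in Q. apply (mod_shift_neq' k 1 m); auto; lia.
    + apply (f_equal src) in Q. rewrite src_rev, cycle_dart_tgt in Q by auto.
      unfold cycle_dart, src in Q; simpl in Q.
      apply cyc_at_inj in Q; auto; try lia. replace (S (S k)) with (k + 2)%nat in Q by lia. symmetry in Q.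
      apply (mod_shift_neq' k 2 m); auto; lia.
Qed.

Lemma adv_mod_return d m t : (0 < m)%nat -> adv m d = d -> adv t d = adv (t mod m) d.
Proof. intros H0 H. assert (A : forall q, adv (q * m) d = d).
  { induction q; auto. change (adv (m + q * m) d = d). rewrite adv_add, IHq; auto. }
  rewrite (Nat.div_mod t m) at 1 by lia. rewrite Nat.add_comm, adv_add, Nat.mul_comm, A; auto. Qed.

Section CycleAlongBoundary.
Variable C : list pt.
Hypothesis HCy : is_cycle occ C.
Hypothesis Hb : forall e, cycle_edge C e -> bdart_edge e.

Lemma cycle_darts_forward :
  bdart (cycle_dart C 0) -> forall k, bdart (cycle_dart C k) /\ cycle_dart C k = adv k (cycle_dart C 0).
Proof.
  intros H0 k; induction k as [|k [I1 I2]]; [split; auto|].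
  rewrite (proj1 (cycle_dart_next C k HCy Hb) I1). split; [apply next_dart_bdart; auto | rewrite I2; auto].
Qed.

Lemma cycle_darts_backward : bdart (dart_rev (cycle_dart C 0)) ->
  forall n, (n <= length C)%nat ->
  bdart (dart_rev (cycle_dart C (length C - n))) /\
  dart_rev (cycle_dart C (length C - n)) = adv n (dart_rev (cycle_dart C 0)).
Proof.
  intros H0. pose proof HCy as [Hm _]. set (m := length C).
  assert (Em : cycle_dart C m = cycle_dart C 0) by (apply (cycle_dart_period C 0); lia).
  induction n as [|n IH]; intros Hn.
  { rewrite Nat.sub_0_r, Em. auto. }
  destruct (IH ltac:(lia)) as [I1 I2]. replace (m - n)%nat with (S (m - S n)) in I1, I2 by lia.
  rewrite (proj2 (cycle_dart_next C (m - S n) HCy Hb) I1).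
  split; [apply next_dart_bdart; auto | rewrite I2; auto].
Qed.

Lemma cycle_is_orbit : exists d, bdart d /\ same_cycle C (orbit_cycle d).
Proof.
  pose proof (is_cycle_walk C HCy) as HC. pose proof HCy as [Hm _]. set (m := length C) in *.
  destruct (Hb _ (cycle_dart_edge C 0 HC)) as [d' [Hd' Ed']].
  destruct (classic (bdart (cycle_dart C 0))) as [H0|H0].
  - pose proof (cycle_darts_forward H0) as A.
    exists (cycle_dart C 0); split; auto. intro e. split.
    + intro He. destruct (cycle_edge_dart C e HC He) as [k ->].
      rewrite (proj2 (A k)). apply orbit_cycle_edge_adv; auto.
    + intro He. apply orbit_cycle_edge_dart in He; auto. destruct He as [t ->].
      rewrite <- (proj2 (A t)). apply cycle_dart_edge; auto.
  - set (r := dart_rev (cycle_dart C 0)).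
    assert (Hr : bdart r).
    { symmetry in Ed'. destruct (dart_edge_eq _ _ Ed') as [Q|Q]; [rewrite Q in H0; contradiction|].
      unfold r; rewrite Q, dart_rev_involutive; auto. }
    pose proof (cycle_darts_backward Hr) as A. fold m r in A.
    assert (Hrm : adv m r = r) by (rewrite <- (proj2 (A m ltac:(lia))), Nat.sub_diag; auto).
    exists r; split; auto. intro e. split.
    + intro He. destruct (cycle_edge_dart C e HC He) as [k ->]. rewrite cycle_dart_mod. fold m.
      assert (Hk : (k mod m < m)%nat) by (apply Nat.mod_upper_bound; lia).
      rewrite <- dart_edge_rev. replace (k mod m)%nat with (m - (m - k mod m))%nat by lia.
      rewrite (proj2 (A (m - k mod m)%nat ltac:(lia))). apply orbit_cycle_edge_adv; auto.
    + intro He. apply orbit_cycle_edge_dart in He; auto. destruct He as [t ->].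
      rewrite (adv_mod_return r m t) by (auto; lia).
      assert (Ht : (t mod m < m)%nat) by (apply Nat.mod_upper_bound; lia).
      rewrite <- (proj2 (A (t mod m)%nat ltac:(lia))), dart_edge_rev. apply cycle_dart_edge; auto.
Qed.

End CycleAlongBoundary.

Lemma cycles_unique Cs' : good_family occ Cs' -> same_family boundary_cycles Cs'.
Proof. intros [Hcyc [Hunion _]].
  assert (Hc' : forall C', In C' Cs' ->
    exists d, bdart d /\ forall e, cycle_edge C' e <-> cycle_edge (orbit_cycle d) e).
  { intros C' HC'. apply cycle_is_orbit; auto. intros e He. apply outer_iff, Hunion. exists C'; auto. }
  split.
  - intros C HC. apply in_boundary_cycles in HC. destruct HC as [r [Hr ->]].
    assert (He : union_edge Cs' (dart_edge r)). { apply Hunion, outer_iff. exists r; split; auto. apply Hr. }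
    destruct He as [C' [HC' He]]. destruct (Hc' C' HC') as [d [HD Hd]]. exists C'. split; auto.
    apply Hd in He. apply orbit_cycle_edge_dart in He; auto. destruct He as [t Et].
    apply bdart_edge_inj in Et; [|apply Hr|apply adv_bdart; auto]. subst r.
    intro e. rewrite Hd, orbit_cycle_edge_adv_iff; auto. tauto.
  - intros C' HC'. destruct (Hc' C' HC') as [d [HD Hd]]. destruct (orbit_rep d HD) as [r [Hr [n ->]]].
    exists (orbit_cycle r). split. apply in_boundary_cycles; eauto. intro e.
    rewrite Hd, orbit_cycle_edge_adv_iff; [tauto|apply Hr]. Qed.

Lemma boundary_cycles_are_cycles C : In C boundary_cycles -> is_cycle occ C.
Proof. intro HC. apply in_boundary_cycles in HC. destruct HC as [r [Hr ->]].
  apply orbit_cycle_is_cycle, Hr. Qed.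

Lemma boundary_cycles_union e : union_edge boundary_cycles e <-> outer_boundary occ e.
Proof. rewrite union_iff, outer_iff. reflexivity. Qed.

Lemma boundary_cycles_pairwise i j :
  (i < length boundary_cycles)%nat -> (j < length boundary_cycles)%nat -> i <> j ->
  (forall x, ~ (in_interior (nth i boundary_cycles []) x /\ in_interior (nth j boundary_cycles []) x)) /\
  (forall u v, In u (nth i boundary_cycles []) -> In u (nth j boundary_cycles []) ->
               In v (nth i boundary_cycles []) -> In v (nth j boundary_cycles []) -> u = v).
Proof.
  intros Hi Hj Hij. set (dd := (origin, DE)).
  unfold boundary_cycles in *. rewrite length_map in Hi, Hj.
  rewrite !nth_indep with (d := []) (d' := orbit_cycle dd) by (rewrite length_map; auto).
  rewrite !map_nth.
  assert (Ri : is_rep (nth i reps dd)) by (apply in_reps, nth_In; auto).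
  assert (Rj : is_rep (nth j reps dd)) by (apply in_reps, nth_In; auto).
  assert (Nij : nth i reps dd <> nth j reps dd).
  { intro E. apply Hij, (NoDup_nth reps dd); auto. apply NoDup_reps. }
  split.
  - intro x. apply cycles_interiors_disjoint; auto.
  - intros u v U1 U2 V1 V2. apply (cycles_share_one_vertex (nth i reps dd) (nth j reps dd)); auto.
Qed.

Lemma boundary_circuit :
  exists ws es, is_circuit occ ws es /\ forall e, union_edge boundary_cycles e -> In e es.
Proof.
  destruct (encloser_ex origin C0_origin) as [r0 Ho]. destruct (full_trail r0 Ho) as [T [HI Hall]].
  exists (map src T), (map dart_edge T). apply (trail_circuit r0); auto.
Qed.

End Cluster.

Theorem theorem1 (occ : Defs.pt -> Prop) :
  occ Defs.origin ->
  Defs.finite_set (Defs.C0 occ) ->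
  exists Cs : list (list Defs.pt),
    Defs.good_family occ Cs /\
    (forall Cs', Defs.good_family occ Cs' -> Defs.same_family Cs Cs') /\
    (exists ws es, Defs.is_circuit occ ws es /\
       forall e, Defs.union_edge Cs e -> In e es).
Proof.
  intros Hocc Hfin. exists (boundary_cycles occ Hfin).
  split; [|split].
  - split; [|split; [|split; [|split; [|split]]]].
    + apply boundary_cycles_are_cycles.
    + apply boundary_cycles_union; assumption.
    + apply cycles_connected; assumption.
    + apply boundary_cycles_pairwise; assumption.
    + apply cycles_cover; assumption.
    + apply cycle_edges_boundary; assumption.
  - apply cycles_unique; assumption.
  - apply boundary_circuit; assumption.
Qed.
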